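(* Let $\Omega\subset\mathbb{C}$ be a simply connected domain and let $(g,\mathcal{P},\mathcal{Q})$ be a Weierstrass data of the first kind on $\Omega$. Then there exists a map $\mathbf{X}=(\mathbf{x}_1,\mathbf{x}_2,\mathbf{x}_3,\mathbf{x}_4):\Omega\to\mathbb{L}^4$ (unique up to an additive constant vector) with $$\mathbf{X}_z=\mathcal{P}_z\begin{bmatrix}1/g\\ i/g\\ 1\\ 1\end{bmatrix}+\mathcal{Q}_z\begin{bmatrix}g\\ -ig\\ -1\\ 1\end{bmatrix},$$ and it satisfies: (i) $\mathbf{X}_{z\overline z}=\mathcal{Q}_{z\overline z}\,\mathcal{G}$, where $\mathcal{G}:=\big(2\,\mathrm{Re}\,g,\;2\,\mathrm{Im}\,g,\;-1+|g|^2,\;1+|g|^2\big)^T$; (ii) up to additive constants, $\mathbf{x}_3=\mathcal{P}-\mathcal{Q}$ and $\mathbf{x}_4=\mathcal{P}+\mathcal{Q}$; (iii) $\langle\mathcal{G},\mathcal{G}\rangle=0$ and $\langle\mathbf{X}_z,\mathcal{G}\rangle=0$; (iv) $\mathbf{X}$ is a conformal spacelike immersion whose induced metric is $$ds^2=\frac{4}{|g|^2}\left|\mathcal{P}_z-|g|^2\mathcal{Q}_z\right|^2|dz|^2;$$ (v) the surface $\mathbf{X}(\Omega)$ is marginally trapped, i.e. its mean curvature vector $\mathbf{H}$ satisfies $\langle\mathbf{H},\mathbf{H}\rangle=0$.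
   Context: $\Omega\subset\mathbb{R}^2\equiv\mathbb{C}$ has complex coordinate $z=u+iv$, and $\partial_z=\frac12(\partial_u-i\partial_v)$, $\partial_{\overline z}=\frac12(\partial_u+i\partial_v)$; subscripts denote partial derivatives. $\mathbb{L}^4$ is $\mathbb{R}^4$ with the Lorentzian metric $\langle x,y\rangle=x_1y_1+x_2y_2+x_3y_3-x_4y_4$; this form is extended complex-bilinearly to $\mathbb{C}^4$. A map $\mathbf{X}:\Omega\to\mathbb{L}^4$ is a conformal spacelike immersion with metric $\Lambda|dz|^2=\Lambda(du^2+dv^2)$, $\Lambda>0$, iff $\langle\mathbf{X}_z,\mathbf{X}_z\rangle=0$ and $\Lambda=2\langle\mathbf{X}_z,\overline{\mathbf{X}_z}\rangle>0$. Its mean curvature vector is $\mathbf{H}=\Delta_{ds^2}\mathbf{X}=\frac{4}{\Lambda}\mathbf{X}_{z\overline z}$. A spacelike surface is marginally trapped if $\langle\mathbf{H},\mathbf{H}\rangle=0$. A Weierstrass data of the first kind on $\Omega$ is a triple $(g,\mathcal{P},\mathcal{Q})$ where $g:\Omega\to\mathbb{C}\setminus\{0\}$ and $\mathcal{P},\mathcal{Q}:\Omega\to\mathbb{R}$ are $\mathcal{C}^2$, satisfying $g_{\overline z}=0$, $\mathcal{P}_{z\overline z}=|g|^2\mathcal{Q}_{z\overline z}$, and $\mathcal{P}_z-|g|^2\mathcal{Q}_z\neq0$ at every point of $\Omega$. *)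

From Stdlib Require Import Reals.
From Coquelicot Require Import Coquelicot.
Open Scope R_scope.

(* A continuous map on [0,1] (resp. [0,1]^2) extends
   continuously to R (resp. R^2) by clamping, so requiring global continuity
   is no restriction. *)
Definition path_connected (U : C -> Prop) : Prop :=
  forall a b : C, U a -> U b ->
    exists gamma : R -> C,
      (forall t : R, continuous gamma t) /\
      gamma 0 = a /\ gamma 1 = b /\
      (forall t : R, 0 <= t <= 1 -> U (gamma t)).

Definition loops_contractible (U : C -> Prop) : Prop :=
  forall gamma : R -> C,
    (forall t : R, continuous gamma t) ->
    (forall t : R, 0 <= t <= 1 -> U (gamma t)) ->
    gamma 0 = gamma 1 ->
    exists Hm : R * R -> C,
      (forall p : R * R, continuous Hm p) /\
      (forall s t : R, 0 <= s <= 1 -> 0 <= t <= 1 -> U (Hm (s, t))) /\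
      (forall t : R, 0 <= t <= 1 -> Hm (0, t) = gamma t) /\
      (forall t : R, 0 <= t <= 1 -> Hm (1, t) = Hm (1, 0)) /\
      (forall s : R, 0 <= s <= 1 -> Hm (s, 0) = Hm (s, 1)).

Definition simply_connected_domain (U : C -> Prop) : Prop :=
  (exists z, U z) /\ open U /\ path_connected U /\ loops_contractible U.

Definition du (f : C -> R) (z : C) : R := Derive (fun t => f (t, snd z)) (fst z).
Definition dv (f : C -> R) (z : C) : R := Derive (fun t => f (fst z, t)) (snd z).

Definition duC (F : C -> C) (z : C) : C :=
  (du (fun w => Re (F w)) z, du (fun w => Im (F w)) z).
Definition dvC (F : C -> C) (z : C) : C :=
  (dv (fun w => Re (F w)) z, dv (fun w => Im (F w)) z).

Definition dzC (F : C -> C) (z : C) : C :=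
  Cmult (RtoC (/2)) (Cminus (duC F z) (Cmult Ci (dvC F z))).
Definition dzbC (F : C -> C) (z : C) : C :=
  Cmult (RtoC (/2)) (Cplus (duC F z) (Cmult Ci (dvC F z))).

Definition dz (f : C -> R) : C -> C := dzC (fun w => RtoC (f w)).
Definition dzb (f : C -> R) : C -> C := dzbC (fun w => RtoC (f w)).

Definition dzdzb (f : C -> R) : C -> C := dzbC (dz f).

Definition C1_on (U : C -> Prop) (f : C -> R) : Prop :=
  forall z : C, U z ->
    ex_derive (fun t => f (t, snd z)) (fst z) /\
    ex_derive (fun t => f (fst z, t)) (snd z) /\
    continuous f z /\ continuous (du f) z /\ continuous (dv f) z.

Definition C2_on (U : C -> Prop) (f : C -> R) : Prop :=
  C1_on U f /\ C1_on U (du f) /\ C1_on U (dv f).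

Definition C2C_on (U : C -> Prop) (F : C -> C) : Prop :=
  C2_on U (fun w => Re (F w)) /\ C2_on U (fun w => Im (F w)).

Definition partials_exist_on (U : C -> Prop) (f : C -> R) : Prop :=
  forall z : C, U z ->
    ex_derive (fun t => f (t, snd z)) (fst z) /\
    ex_derive (fun t => f (fst z, t)) (snd z).

Definition Cabs2 (w : C) : C := RtoC (Cmod w ^ 2).

Definition weierstrass_first_kind (U : C -> Prop) (g : C -> C) (P Q : C -> R) : Prop :=
  C2C_on U g /\ C2_on U P /\ C2_on U Q /\
  (forall z, U z -> g z <> RtoC 0) /\
  (forall z, U z -> dzbC g z = RtoC 0) /\
  (forall z, U z -> dzdzb P z = Cmult (Cabs2 (g z)) (dzdzb Q z)) /\
  (forall z, U z -> Cminus (dz P z) (Cmult (Cabs2 (g z)) (dz Q z)) <> RtoC 0).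

Definition C4 : Type := (C * C * C * C)%type.

(* complex-bilinear extension of <x,y> = x1y1 + x2y2 + x3y3 - x4y4 *)
Definition lor (a b : C4) : C :=
  match a, b with
  | (a1, a2, a3, a4), (b1, b2, b3, b4) =>
      Cminus (Cplus (Cplus (Cmult a1 b1) (Cmult a2 b2)) (Cmult a3 b3)) (Cmult a4 b4)
  end.

Definition conj4 (a : C4) : C4 :=
  match a with (a1, a2, a3, a4) => (Cconj a1, Cconj a2, Cconj a3, Cconj a4) end.

Definition scal4 (c : C) (a : C4) : C4 :=
  match a with (a1, a2, a3, a4) => (Cmult c a1, Cmult c a2, Cmult c a3, Cmult c a4) end.

Definition add4 (a b : C4) : C4 :=
  match a, b with
  | (a1, a2, a3, a4), (b1, b2, b3, b4) => (Cplus a1 b1, Cplus a2 b2, Cplus a3 b3, Cplus a4 b4)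
  end.

Definition Xz (x1 x2 x3 x4 : C -> R) (z : C) : C4 :=
  (dz x1 z, dz x2 z, dz x3 z, dz x4 z).
Definition Xzzb (x1 x2 x3 x4 : C -> R) (z : C) : C4 :=
  (dzdzb x1 z, dzdzb x2 z, dzdzb x3 z, dzdzb x4 z).

Definition Lambda (x1 x2 x3 x4 : C -> R) (z : C) : C :=
  Cmult (RtoC 2) (lor (Xz x1 x2 x3 x4 z) (conj4 (Xz x1 x2 x3 x4 z))).

Definition conformal_spacelike_at (x1 x2 x3 x4 : C -> R) (z : C) : Prop :=
  lor (Xz x1 x2 x3 x4 z) (Xz x1 x2 x3 x4 z) = RtoC 0 /\
  Im (Lambda x1 x2 x3 x4 z) = 0 /\ 0 < Re (Lambda x1 x2 x3 x4 z).

Definition meanH (x1 x2 x3 x4 : C -> R) (z : C) : C4 :=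
  scal4 (Cdiv (RtoC 4) (Lambda x1 x2 x3 x4 z)) (Xzzb x1 x2 x3 x4 z).

Definition WformulaXz (g : C -> C) (P Q : C -> R) (z : C) : C4 :=
  add4
    (scal4 (dz P z) (Cinv (g z), Cdiv Ci (g z), RtoC 1, RtoC 1))
    (scal4 (dz Q z) (g z, Cmult (Copp Ci) (g z), RtoC (-1), RtoC 1)).

Definition Gvec (g : C -> C) (z : C) : C4 :=
  (RtoC (2 * Re (g z)), RtoC (2 * Im (g z)),
   RtoC (-1 + Cmod (g z) ^ 2), RtoC (1 + Cmod (g z) ^ 2)).

From Stdlib Require Import Reals Lra Lia Classical ClassicalEpsilon.
From Coquelicot Require Import Coquelicot.
Open Scope R_scope.

(* Write g = a + i b.  The last two components of the formula say that x3 and x4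
   are P - Q and P + Q.  For x1 and x2 it prescribes real gradients, rational in
   a, b and the first derivatives of P and Q; the Cauchy-Riemann equations for g
   together with P_{z zbar} = |g|^2 Q_{z zbar} make these gradients closed 1-forms,
   so on a simply connected domain they are exact.  The primitives are built by
   integrating along paths whose fine partitions are covered by squares of Omega,
   and homotopy invariance comes from a Lebesgue-number grid on the contracting
   homotopy.  Functions with the same X_z on a connected domain differ by
   constants.  What remains is pointwise algebra: the divergences of the two forms
   give X_{z zbar} = Q_{z zbar} G, the vector G is null and orthogonal to X_z, and
   2 <X_z, conj X_z> = 4 |P_z - |g|^2 Q_z|^2 / |g|^2 > 0, so H = (4 / Lambda) X_{z zbar}
   is a multiple of the null vector G. *)

Definition square (c : C) (r : R) (p : C) : Prop :=
  Rabs (fst p - fst c) < r /\ Rabs (snd p - snd c) < r.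

Definition square_in (Om : C -> Prop) (c : C) (r : R) : Prop :=
  forall p, square c r p -> Om p.

Lemma square_center c r : 0 < r -> square c r c.
Proof. intros Hr. unfold square. rewrite !Rminus_diag, Rabs_R0. tauto. Qed.

(* Balls of [C] and [R] are definitionally squares and intervals, so the
   lemma below is used with [ball] read as [square] / [Rabs (_ - _) < _]. *)
Lemma continuous_eps_delta {U V : UniformSpace} (f : U -> V) (x : U) :
  continuous f x <->
  (forall eps, 0 < eps -> exists d, 0 < d /\ forall y, ball x d y -> ball (f x) eps (f y)).
Proof.
  unfold continuous. rewrite filterlim_locally. split.
  - intros H eps Heps. destruct (H (mkposreal eps Heps)) as [d Hd].
    exists d. split; [apply cond_pos | exact Hd].
  - intros H eps. destruct (H eps (cond_pos eps)) as [d [Hd0 Hd]].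
    exists (mkposreal d Hd0). exact Hd.
Qed.

Lemma open_contains_square (U : C -> Prop) z : open U -> U z -> exists r, 0 < r /\ square_in U z r.
Proof.
  intros HU Hz. destruct (HU z Hz) as [r Hr].
  exists r. split; [apply cond_pos | exact Hr].
Qed.

Lemma square_open c r w : square c r w -> exists e, 0 < e /\ forall p, square w e p -> square c r p.
Proof.
  intros [H1 H2].
  exists (Rmin (r - Rabs (fst w - fst c)) (r - Rabs (snd w - snd c))). split.
  { apply Rmin_pos; lra. }
  intros p [Hp1 Hp2].
  pose proof (Rmin_l (r - Rabs (fst w - fst c)) (r - Rabs (snd w - snd c))).
  pose proof (Rmin_r (r - Rabs (fst w - fst c)) (r - Rabs (snd w - snd c))).
  split.
  - replace (fst p - fst c) with ((fst p - fst w) + (fst w - fst c)) by ring.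
    eapply Rle_lt_trans; [apply Rabs_triang | lra].
  - replace (snd p - snd c) with ((snd p - snd w) + (snd w - snd c)) by ring.
    eapply Rle_lt_trans; [apply Rabs_triang | lra].
Qed.

Lemma Rabs_between (x y t c r : R) : Rabs (x - c) < r -> Rabs (y - c) < r ->
  Rmin x y <= t <= Rmax x y -> Rabs (t - c) < r.
Proof.
  unfold Rmin, Rmax. intros H1 H2 H3. apply Rabs_def2 in H1. apply Rabs_def2 in H2.
  destruct (Rle_dec x y); apply Rabs_def1; lra.
Qed.

Lemma locally_R_intro (x : R) (P : R -> Prop) e :
  0 < e -> (forall y, Rabs (y - x) < e -> P y) -> locally x P.
Proof. intros He H. exists (mkposreal e He). exact H. Qed.

Lemma locally_open (Om P : C -> Prop) z : open Om -> Om z -> (forall w, Om w -> P w) -> locally z P.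
Proof. intros HO Hz H. destruct (HO z Hz) as [e He]. exists e. intros y Hy. apply H, He, Hy. Qed.

Lemma continuous_section_u (f : C -> R) u v : continuous f (u, v) -> continuous (fun t => f (t, v)) u.
Proof.
  rewrite !continuous_eps_delta. intros H eps Heps. destruct (H eps Heps) as [d [Hd H']].
  exists d. split; [exact Hd|]. intros s Hs. apply (H' (s, v)).
  change (square (u, v) d (s, v)). split; [exact Hs|].
  simpl. rewrite Rminus_diag, Rabs_R0. exact Hd.
Qed.

Lemma continuous_section_v (f : C -> R) u v : continuous f (u, v) -> continuous (fun t => f (u, t)) v.
Proof.
  rewrite !continuous_eps_delta. intros H eps Heps. destruct (H eps Heps) as [d [Hd H']].
  exists d. split; [exact Hd|]. intros s Hs. apply (H' (u, s)).
  change (square (u, v) d (u, s)). split; [|exact Hs].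
  simpl. rewrite Rminus_diag, Rabs_R0. exact Hd.
Qed.

Lemma continuous_locally_bounded (f : C -> R) z : continuous f z ->
  exists d, 0 < d /\ forall w, square z d w -> Rabs (f w) <= Rabs (f z) + 1.
Proof.
  intros Hf. destruct (proj1 (continuous_eps_delta f z) Hf 1 Rlt_0_1) as [d [Hd H]].
  exists d. split; [exact Hd|]. intros w Hw.
  replace (f w) with ((f w - f z) + f z) by ring.
  pose proof (H w Hw) as E. change (Rabs (f w - f z) < 1) in E.
  eapply Rle_trans; [apply Rabs_triang | lra].
Qed.

Lemma derive_bound_lipschitz (f df : R -> R) (a b K : R) :
  (forall t, Rmin a b <= t <= Rmax a b -> is_derive f t (df t) /\ Rabs (df t) <= K) ->
  Rabs (f b - f a) <= K * Rabs (b - a).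
Proof.
  intros H. destruct (MVT_gen f a b df) as [c [Hc Heq]].
  - intros x Hx. apply H. lra.
  - intros x Hx. apply continuity_pt_filterlim.
    apply (ex_derive_continuous f x). exists (df x). apply H, Hx.
  - rewrite Heq, Rabs_mult. apply Rmult_le_compat_r; [apply Rabs_pos | apply H, Hc].
Qed.

Lemma derive_zero_const (f : R -> R) (a b : R) :
  (forall t, Rmin a b <= t <= Rmax a b -> is_derive f t 0) -> f a = f b.
Proof.
  intros H. assert (Hl : Rabs (f b - f a) <= 0 * Rabs (b - a)).
  { apply derive_bound_lipschitz with (df := fun _ => 0).
    intros t Ht. rewrite Rabs_R0. split; [apply H, Ht | lra]. }
  rewrite Rmult_0_l in Hl. pose proof (Rabs_pos (f b - f a)).
  assert (Rabs (f b - f a) = 0) as E by lra. apply Rabs_eq_0 in E. lra.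
Qed.

Lemma is_derive_eq {f : R -> R} {x l l'} : is_derive f x l -> l = l' -> is_derive f x l'.
Proof. intros H ->; exact H. Qed.

Lemma partials_zero_const_square (h : C -> R) c r :
  (forall w, square c r w ->
     is_derive (fun t => h (t, snd w)) (fst w) 0 /\ is_derive (fun t => h (fst w, t)) (snd w) 0) ->
  forall p q, square c r p -> square c r q -> h p = h q.
Proof.
  intros H [p1 p2] [q1 q2] [Hp1 Hp2] [Hq1 Hq2]. simpl in *.
  transitivity (h (q1, p2)).
  - apply (derive_zero_const (fun t => h (t, p2))). intros t Ht.
    apply (H (t, p2)). split; [apply (Rabs_between p1 q1 t) | ]; auto.
  - apply (derive_zero_const (fun t => h (q1, t))). intros t Ht.
    apply (H (q1, t)). split; [ | apply (Rabs_between p2 q2 t)]; auto.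
Qed.

(** * Integrals of closed forms along staircases *)

(* [A du + B dv] is closed, [D] being the common value of [dv A] and [du B]. *)
Definition closed_form (Om : C -> Prop) (A B D : C -> R) : Prop :=
  forall z, Om z -> continuous A z /\ continuous B z /\ continuous D z /\
    is_derive (fun t => A (fst z, t)) (snd z) (D z) /\
    is_derive (fun t => B (t, snd z)) (fst z) (D z).

Definition stair_int (A B : C -> R) (p q : C) : R :=
  RInt (fun s => A (s, snd p)) (fst p) (fst q) + RInt (fun t => B (fst q, t)) (snd p) (snd q).

Lemma stair_int_refl A B p : stair_int A B p p = 0.
Proof. unfold stair_int. rewrite !(@RInt_point R_CompleteNormedModule). unfold zero; simpl. ring. Qed.

Section StairIntegral.

Variables (Om : C -> Prop) (A B D : C -> R).
Hypothesis closed : closed_form Om A B D.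
Variables (c : C) (r : R).
Hypothesis square_sub : square_in Om c r.

Lemma closed_square w : square c r w ->
  continuous A w /\ continuous B w /\ continuous D w /\
  is_derive (fun t => A (fst w, t)) (snd w) (D w) /\ is_derive (fun t => B (t, snd w)) (fst w) (D w).
Proof. intros Hw. apply closed, square_sub, Hw. Qed.

Lemma ex_RInt_vertical x a b : Rabs (x - fst c) < r ->
  Rabs (a - snd c) < r -> Rabs (b - snd c) < r -> ex_RInt (fun t => B (x, t)) a b.
Proof.
  intros Hx Ha Hb. apply (@ex_RInt_continuous R_CompleteNormedModule). intros t Ht.
  apply continuous_section_v, (closed_square (x, t)).
  split; [exact Hx | apply (Rabs_between a b t); auto].
Qed.

Lemma ex_RInt_horizontal y a b : Rabs (y - snd c) < r ->
  Rabs (a - fst c) < r -> Rabs (b - fst c) < r -> ex_RInt (fun s => A (s, y)) a b.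
Proof.
  intros Hy Ha Hb. apply (@ex_RInt_continuous R_CompleteNormedModule). intros s Hs.
  apply continuous_section_u, (closed_square (s, y)).
  split; [apply (Rabs_between a b s); auto | exact Hy].
Qed.

Lemma stair_int_dv p w : square c r p -> square c r w ->
  is_derive (fun t => stair_int A B p (fst w, t)) (snd w) (B w).
Proof.
  intros [Hp1 Hp2] [Hw1 Hw2]. destruct w as [w1 w2]. simpl in *. unfold stair_int; simpl.
  eapply is_derive_eq.
  - apply (is_derive_plus (fun _ => RInt (fun s => A (s, snd p)) (fst p) w1)
                          (fun t => RInt (fun t0 => B (w1, t0)) (snd p) t)).
    + apply is_derive_const.
    + apply (is_derive_RInt (fun t0 => B (w1, t0)) _ (snd p) w2).
      * apply locally_R_intro with (r - Rabs (w2 - snd c)); [lra|]. intros y Hy.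
        apply (@RInt_correct R_CompleteNormedModule), ex_RInt_vertical; auto.
        replace (y - snd c) with ((y - w2) + (w2 - snd c)) by ring.
        eapply Rle_lt_trans; [apply Rabs_triang | lra].
      * apply continuous_section_v, (closed_square (w1, w2)). split; auto.
  - unfold plus, zero; simpl. ring.
Qed.

(* Differentiating under the integral sign: [du] of the vertical part is
   [∫ du B = ∫ dv A], which the fundamental theorem evaluates. *)
Lemma RInt_du_vertical p2 w1 w2 : Rabs (w1 - fst c) < r ->
  Rabs (p2 - snd c) < r -> Rabs (w2 - snd c) < r ->
  RInt (fun t => Derive (fun u => B (u, t)) w1) p2 w2 = A (w1, w2) - A (w1, p2).
Proof.
  intros Hw1 Hp2 Hw2.
  assert (Hin : forall t, Rmin p2 w2 <= t <= Rmax p2 w2 -> square c r (w1, t)).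
  { intros t Ht. split; [exact Hw1 | apply (Rabs_between p2 w2 t); auto]. }
  rewrite (RInt_ext _ (fun t => D (w1, t))).
  - apply is_RInt_unique, (is_RInt_derive (fun t => A (w1, t))).
    + intros t Ht. apply (closed_square _ (Hin t Ht)).
    + intros t Ht. apply continuous_section_v, (closed_square _ (Hin t Ht)).
  - intros t Ht. apply is_derive_unique, (closed_square (w1, t)), Hin. lra.
Qed.

Lemma du_B_continuous_param p2 w1 w2 : Rabs (w1 - fst c) < r ->
  Rabs (p2 - snd c) < r -> Rabs (w2 - snd c) < r ->
  forall t, Rmin p2 w2 <= t <= Rmax p2 w2 ->
  continuity_2d_pt (fun u t => Derive (fun u0 => B (u0, t)) u) w1 t.
Proof.
  intros Hw1 Hp2 Hw2 t Ht.
  assert (Hint : square c r (w1, t)) by (split; [exact Hw1 | apply (Rabs_between p2 w2 t); auto]).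
  destruct (square_open c r _ Hint) as [e2 [He2 Hloc]].
  intros eps. destruct (proj1 (continuous_eps_delta D _) (proj1 (proj2 (proj2 (closed_square _ Hint))))
                         eps (cond_pos eps)) as [d [Hd HD]].
  exists (mkposreal (Rmin d e2) (Rmin_pos _ _ Hd He2)). simpl. intros u v Hu Hv.
  pose proof (Rmin_l d e2). pose proof (Rmin_r d e2).
  assert (Huv : square c r (u, v)) by (apply Hloc; split; simpl; lra).
  pose proof (is_derive_unique _ _ _ (proj2 (proj2 (proj2 (proj2 (closed_square _ Huv)))))) as E1.
  pose proof (is_derive_unique _ _ _ (proj2 (proj2 (proj2 (proj2 (closed_square _ Hint)))))) as E2.
  simpl in E1, E2. rewrite E1, E2. apply (HD (u, v)).
  change (square (w1, t) d (u, v)). split; simpl; lra.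
Qed.

Lemma stair_int_du p w : square c r p -> square c r w ->
  is_derive (fun t => stair_int A B p (t, snd w)) (fst w) (A w).
Proof.
  intros [Hp1 Hp2] [Hw1 Hw2]. destruct w as [w1 w2]. simpl in *. unfold stair_int; simpl.
  set (e := r - Rabs (w1 - fst c)).
  assert (He : forall y, Rabs (y - w1) < e -> Rabs (y - fst c) < r).
  { intros y Hy. replace (y - fst c) with ((y - w1) + (w1 - fst c)) by ring.
    unfold e in Hy. eapply Rle_lt_trans; [apply Rabs_triang | lra]. }
  assert (He0 : 0 < e) by (unfold e; lra).
  eapply is_derive_eq.
  - apply (is_derive_plus (fun t => RInt (fun s => A (s, snd p)) (fst p) t)
                          (fun t => RInt (fun t0 => B (t, t0)) (snd p) w2)).
    + apply (is_derive_RInt (fun s => A (s, snd p)) _ (fst p) w1).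
      * apply locally_R_intro with e; auto. intros y Hy.
        apply (@RInt_correct R_CompleteNormedModule), ex_RInt_horizontal; auto.
      * apply continuous_section_u, (closed_square (w1, snd p)). split; auto.
    + apply (is_derive_RInt_param (fun u t => B (u, t)) (snd p) w2 w1).
      * apply locally_R_intro with e; auto. intros y Hy t Ht.
        exists (D (y, t)). apply (closed_square (y, t)).
        split; [apply He, Hy | apply (Rabs_between (snd p) w2 t); auto].
      * apply du_B_continuous_param; auto.
      * apply locally_R_intro with e; auto. intros y Hy. apply ex_RInt_vertical; auto.
  - change (A (w1, snd p) + RInt (fun t => Derive (fun u => B (u, t)) w1) (snd p) w2 = A (w1, w2)).
    rewrite RInt_du_vertical; auto. ring.
Qed.

Lemma stair_int_cocycle p q w : square c r p -> square c r q -> square c r w ->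
  stair_int A B p q + stair_int A B q w = stair_int A B p w.
Proof.
  intros Hp Hq Hw.
  set (h := fun x => stair_int A B p x - (stair_int A B p q + stair_int A B q x)).
  assert (Hh : h w = h q).
  { apply (partials_zero_const_square h c r); auto. intros x Hx. split.
    - eapply is_derive_eq.
      + apply (is_derive_minus (fun t => stair_int A B p (t, snd x))
                               (fun t => stair_int A B p q + stair_int A B q (t, snd x))).
        * apply stair_int_du; auto.
        * apply (is_derive_plus (fun _ => stair_int A B p q) (fun t => stair_int A B q (t, snd x))).
          -- apply is_derive_const.
          -- apply stair_int_du; auto.
      + unfold minus, plus, opp, zero; simpl. ring.
    - eapply is_derive_eq.
      + apply (is_derive_minus (fun t => stair_int A B p (fst x, t))
                               (fun t => stair_int A B p q + stair_int A B q (fst x, t))).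
        * apply stair_int_dv; auto.
        * apply (is_derive_plus (fun _ => stair_int A B p q) (fun t => stair_int A B q (fst x, t))).
          -- apply is_derive_const.
          -- apply stair_int_dv; auto.
      + unfold minus, plus, opp, zero; simpl. ring. }
  unfold h in Hh. rewrite stair_int_refl in Hh. lra.
Qed.

Lemma stair_int_rev p q : square c r p -> square c r q ->
  stair_int A B q p = - stair_int A B p q.
Proof.
  intros Hp Hq. pose proof (stair_int_cocycle p q p Hp Hq Hp) as E.
  rewrite stair_int_refl in E. lra.
Qed.

Lemma stair_int_bound rho K w : rho <= r ->
  (forall p, square c rho p -> Rabs (A p) <= K /\ Rabs (B p) <= K) -> square c rho w ->
  Rabs (stair_int A B c w) <= K * Rabs (fst w - fst c) + K * Rabs (snd w - snd c).
Proof.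
  intros Hrho HK [Hw1 Hw2]. destruct w as [w1 w2]. simpl in *.
  assert (Hrho0 : 0 < rho) by (pose proof (Rabs_pos (w1 - fst c)); lra).
  assert (Hc1 : Rabs (fst c - fst c) < rho) by (rewrite Rminus_diag, Rabs_R0; exact Hrho0).
  assert (Hc2 : Rabs (snd c - snd c) < rho) by (rewrite Rminus_diag, Rabs_R0; exact Hrho0).
  assert (Hc : square c r c) by (apply square_center; lra).
  replace (stair_int A B c (w1, w2)) with
    ((stair_int A B c (w1, w2) - stair_int A B c (w1, snd c)) +
     (stair_int A B c (w1, snd c) - stair_int A B c (fst c, snd c)))
    by (rewrite <- surjective_pairing, stair_int_refl; ring).
  eapply Rle_trans; [apply Rabs_triang|]. rewrite Rplus_comm. apply Rplus_le_compat.
  - apply (derive_bound_lipschitz (fun t => stair_int A B c (t, snd c)) (fun t => A (t, snd c))).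
    intros t Ht. assert (Ht' : Rabs (t - fst c) < rho) by (apply (Rabs_between (fst c) w1 t); auto).
    split.
    + apply (stair_int_du c (t, snd c)); auto. split; simpl; lra.
    + apply (HK (t, snd c)). split; simpl; auto.
  - apply (derive_bound_lipschitz (fun t => stair_int A B c (w1, t)) (fun t => B (w1, t))).
    intros t Ht. assert (Ht' : Rabs (t - snd c) < rho) by (apply (Rabs_between (snd c) w2 t); auto).
    split.
    + apply (stair_int_dv c (w1, t)); auto. split; simpl; lra.
    + apply (HK (w1, t)). split; simpl; auto.
Qed.

Lemma stair_int_continuous : 0 < r -> continuous (stair_int A B c) c.
Proof.
  intros Hr. destruct (closed c (square_sub c (square_center c r Hr))) as [HA [HB _]].
  destruct (continuous_locally_bounded A c HA) as [dA [HdA HAb]].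
  destruct (continuous_locally_bounded B c HB) as [dB [HdB HBb]].
  set (K := Rabs (A c) + Rabs (B c) + 1).
  assert (HK : 0 < K) by (unfold K; pose proof (Rabs_pos (A c)); pose proof (Rabs_pos (B c)); lra).
  set (rho := Rmin r (Rmin dA dB)).
  assert (Hrho : 0 < rho) by (repeat apply Rmin_pos; auto).
  assert (Hr1 : rho <= r) by apply Rmin_l.
  assert (Hr2 : rho <= dA) by (eapply Rle_trans; [apply Rmin_r | apply Rmin_l]).
  assert (Hr3 : rho <= dB) by (eapply Rle_trans; [apply Rmin_r | apply Rmin_r]).
  assert (Hbd : forall p, square c rho p -> Rabs (A p) <= K /\ Rabs (B p) <= K).
  { intros p [Hp1 Hp2].
    assert (square c dA p) by (split; lra). assert (square c dB p) by (split; lra).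
    pose proof (HAb p ltac:(assumption)). pose proof (HBb p ltac:(assumption)).
    pose proof (Rabs_pos (A c)). pose proof (Rabs_pos (B c)). unfold K. lra. }
  apply continuous_eps_delta. intros eps Heps.
  exists (Rmin rho (eps / (2 * K))). split; [apply Rmin_pos; auto; apply Rdiv_lt_0_compat; lra|].
  intros w Hw. destruct (Hw : square c _ w) as [Hw1 Hw2].
  pose proof (Rmin_l rho (eps / (2 * K))). pose proof (Rmin_r rho (eps / (2 * K))).
  change (Rabs (stair_int A B c w - stair_int A B c c) < eps). rewrite stair_int_refl, Rminus_0_r.
  eapply Rle_lt_trans; [apply (stair_int_bound rho K w Hr1 Hbd); split; lra|].
  assert (E : K * (eps / (2 * K)) = eps / 2) by (field; lra).
  assert (K * Rabs (fst w - fst c) < eps / 2) by (rewrite <- E; apply Rmult_lt_compat_l; lra).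
  assert (K * Rabs (snd w - snd c) < eps / 2) by (rewrite <- E; apply Rmult_lt_compat_l; lra).
  lra.
Qed.

End StairIntegral.

Fixpoint rsum (f : nat -> R) (n : nat) : R :=
  match n with O => 0 | S n => rsum f n + f n end.

Lemma rsum_ext f g n : (forall k, (k < n)%nat -> f k = g k) -> rsum f n = rsum g n.
Proof. induction n; simpl; intros H; auto. rewrite IHn, H; auto. Qed.

Lemma rsum_add f a b : rsum f (a + b) = rsum f a + rsum (fun j => f (a + j)%nat) b.
Proof.
  induction b; simpl; [rewrite Nat.add_0_r; ring|].
  rewrite Nat.add_succ_r. simpl. rewrite IHb. ring.
Qed.

Lemma rsum_mul f N M : rsum f (N * M) = rsum (fun k => rsum (fun j => f (k * M + j)%nat) M) N.
Proof. induction N; simpl; auto. rewrite Nat.add_comm, rsum_add, IHN. reflexivity. Qed.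

Lemma rsum_shift f n : rsum (fun j => f (S j)) n = rsum f n + f n - f O.
Proof. induction n; simpl. { ring. } rewrite IHn. ring. Qed.

Lemma rsum_opp f n : rsum (fun k => - f k) n = - rsum f n.
Proof. induction n; simpl. { ring. } rewrite IHn. ring. Qed.

Lemma rsum_plus f g n : rsum (fun k => f k + g k) n = rsum f n + rsum g n.
Proof. induction n; simpl. { ring. } rewrite IHn. ring. Qed.

Lemma rsum_zero n : rsum (fun _ => 0) n = 0.
Proof. induction n; simpl; [reflexivity|]. rewrite IHn. ring. Qed.

Lemma rsum_first f n : rsum f (S n) = f O + rsum (fun k => f (S k)) n.
Proof. rewrite rsum_shift. simpl. ring. Qed.

Lemma rsum_rev f n : rsum f n = rsum (fun k => f (n - S k)%nat) n.
Proof.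
  induction n; [reflexivity|].
  change (rsum f n + f n = rsum (fun k => f (S n - S k)%nat) (S n)).
  rewrite rsum_first, IHn. replace (S n - 1)%nat with n by lia. rewrite Rplus_comm. reflexivity.
Qed.

Definition node (N k : nat) : R := INR k / INR N.

Lemma node_0 N : node N 0 = 0.
Proof. unfold node. simpl. unfold Rdiv. ring. Qed.

Lemma node_last N : (0 < N)%nat -> node N N = 1.
Proof. intros HN. unfold node. apply Rdiv_diag, not_0_INR. lia. Qed.

Lemma node_le N k k' : (0 < N)%nat -> (k <= k')%nat -> node N k <= node N k'.
Proof.
  intros HN Hk. unfold node, Rdiv. apply Rmult_le_compat_r; [|apply le_INR, Hk].
  left. apply Rinv_0_lt_compat, lt_0_INR. exact HN.
Qed.

Lemma node_scale N M k : (0 < N)%nat -> (0 < M)%nat -> node N k = node (N * M) (k * M).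
Proof.
  intros HN HM. unfold node. rewrite !mult_INR.
  assert (0 < INR N) by (apply lt_0_INR; lia). assert (0 < INR M) by (apply lt_0_INR; lia).
  field. lra.
Qed.

Lemma node_in_01 N k : (0 < N)%nat -> (k <= N)%nat -> 0 <= node N k <= 1.
Proof.
  intros HN Hk. rewrite <- (node_0 N), <- (node_last N HN). unfold node, Rdiv.
  assert (0 < / INR N) by (apply Rinv_0_lt_compat, lt_0_INR; exact HN).
  apply le_INR in Hk. pose proof (pos_INR k). simpl. split; apply Rmult_le_compat_r; lra.
Qed.

Lemma node_half N : (0 < N)%nat -> node (N + N) N = 1/2.
Proof.
  intros HN. unfold node. rewrite plus_INR.
  assert (0 < INR N) by (apply lt_0_INR; lia). field. lra.
Qed.

Lemma node_double N k : (0 < N)%nat -> 2 * node (N + N) k = node N k.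
Proof.
  intros HN. unfold node. rewrite plus_INR.
  assert (0 < INR N) by (apply lt_0_INR; lia). field. lra.
Qed.

Lemma node_double_shift N j : (0 < N)%nat -> 2 * node (N + N) (N + j) - 1 = node N j.
Proof.
  intros HN. unfold node. rewrite !plus_INR.
  assert (0 < INR N) by (apply lt_0_INR; lia). field. lra.
Qed.

Lemma node_rev N k : (0 < N)%nat -> (k <= N)%nat -> 1 - node N k = node N (N - k).
Proof.
  intros HN Hk. unfold node. rewrite minus_INR by exact Hk.
  assert (INR N <> 0) by (apply not_0_INR; lia). field. auto.
Qed.

Definition covered_by_square (Om : C -> Prop) (g : R -> C) (a b : R) : Prop :=
  exists c r, square_in Om c r /\ forall t, a <= t <= b -> square c r (g t).

Definition fine_partition (Om : C -> Prop) (g : R -> C) (N : nat) : Prop :=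
  (0 < N)%nat /\ forall k, (k < N)%nat -> covered_by_square Om g (node N k) (node N (S k)).

(* Along a fine partition this is the integral of [A du + B dv] over [g]. *)
Definition path_sum (A B : C -> R) (g : R -> C) (N : nat) : R :=
  rsum (fun k => stair_int A B (g (node N k)) (g (node N (S k)))) N.

Lemma node_refine_interval N M k j t : (0 < N)%nat -> (0 < M)%nat -> (j < M)%nat ->
  node (N * M) (k * M + j) <= t <= node (N * M) (S (k * M + j)) -> node N k <= t <= node N (S k).
Proof.
  intros HN HM Hj Ht. rewrite !(node_scale N M) by auto.
  assert (0 < N * M)%nat by lia.
  pose proof (node_le (N * M) (k * M) (k * M + j) ltac:(lia) ltac:(lia)).
  pose proof (node_le (N * M) (S (k * M + j)) (S k * M) ltac:(lia) ltac:(simpl; lia)).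
  lra.
Qed.

Lemma fine_partition_refine Om g N M :
  fine_partition Om g N -> (0 < M)%nat -> fine_partition Om g (N * M).
Proof.
  intros [HN HB] HM. split; [lia|]. intros k' Hk'.
  set (k := (k' / M)%nat). set (j := (k' mod M)%nat).
  assert (Hd : k' = (k * M + j)%nat) by (rewrite Nat.mul_comm; apply Nat.div_mod; lia).
  assert (Hj : (j < M)%nat) by (apply Nat.mod_upper_bound; lia).
  assert (Hk : (k < N)%nat) by nia.
  destruct (HB k Hk) as [c [r [HS Ht]]]. exists c, r. split; [exact HS|].
  intros t Ht'. apply Ht. rewrite Hd in Ht'. apply (node_refine_interval N M k j); auto.
Qed.

Section PathSums.

Variables (Om : C -> Prop) (A B D : C -> R).
Hypothesis closed : closed_form Om A B D.

Lemma stair_int_telescope c r (x : nat -> C) M :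
  square_in Om c r -> (forall j, (j <= M)%nat -> square c r (x j)) ->
  rsum (fun j => stair_int A B (x j) (x (S j))) M = stair_int A B (x O) (x M).
Proof.
  intros HS Hx. induction M; simpl; [rewrite stair_int_refl; reflexivity|].
  rewrite IHM by (intros; apply Hx; lia).
  apply (stair_int_cocycle Om A B D closed c r); auto; apply Hx; lia.
Qed.

Lemma path_sum_refine g N M :
  fine_partition Om g N -> (0 < M)%nat -> path_sum A B g (N * M) = path_sum A B g N.
Proof.
  intros [HN HB] HM. unfold path_sum. rewrite rsum_mul. apply rsum_ext. intros k Hk.
  destruct (HB k Hk) as [c [r [HS Ht]]].
  set (x := fun j => g (node (N * M) (k * M + j))).
  transitivity (rsum (fun j => stair_int A B (x j) (x (S j))) M).
  { apply rsum_ext. intros j Hj. unfold x. rewrite Nat.add_succ_r. reflexivity. }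
  rewrite (stair_int_telescope c r x M HS).
  - unfold x. rewrite Nat.add_0_r, (node_scale N M k), (node_scale N M (S k)) by auto.
    simpl. rewrite (Nat.add_comm M). reflexivity.
  - intros j Hj. unfold x. apply Ht. rewrite (node_scale N M k), (node_scale N M (S k)) by auto.
    split; apply node_le; simpl; lia.
Qed.

Lemma path_sum_indep g N M :
  fine_partition Om g N -> fine_partition Om g M -> path_sum A B g N = path_sum A B g M.
Proof.
  intros H1 H2.
  rewrite <- (path_sum_refine g N M H1 (proj1 H2)), <- (path_sum_refine g M N H2 (proj1 H1)).
  rewrite Nat.mul_comm. reflexivity.
Qed.

End PathSums.

(** * Homotopy invariance and primitives *)

Lemma continuous_square_radius (Om : C -> Prop) (F : R * R -> C) u v :
  open Om -> continuous F (u, v) -> Om (F (u, v)) ->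
  exists d, 0 < d /\ exists c r, square_in Om c r /\
    forall s t, Rabs (s - u) < 2 * d -> Rabs (t - v) < 2 * d -> square c r (F (s, t)).
Proof.
  intros HO HC Hin. destruct (open_contains_square Om _ HO Hin) as [r [Hr HrO]].
  destruct (proj1 (continuous_eps_delta F (u, v)) HC r Hr) as [d [Hd Hd']].
  exists (d / 2). split; [lra|]. exists (F (u, v)), r. split; [exact HrO|].
  intros s t Hs Ht. apply (Hd' (s, t)). change (square (u, v) d (s, t)). split; simpl; lra.
Qed.

(* A Lebesgue number argument: by compactness of the unit square, some uniform
   grid of it has every cell mapped by [F] into a square contained in [Om]. *)
Lemma lebesgue_grid (Om : C -> Prop) (F : R * R -> C) :
  open Om -> (forall p, continuous F p) ->
  (forall s t, 0 <= s <= 1 -> 0 <= t <= 1 -> Om (F (s, t))) ->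
  exists M, (0 < M)%nat /\ forall i j, (i < M)%nat -> (j < M)%nat ->
    exists c r, square_in Om c r /\ forall s t,
      node M i <= s <= node M (S i) -> node M j <= t <= node M (S j) -> square c r (F (s, t)).
Proof.
  intros HO HC HIn.
  assert (H : forall u v, exists d : posreal, 0 <= u <= 1 -> 0 <= v <= 1 ->
    exists c r, square_in Om c r /\
      forall s t, Rabs (s - u) < 2 * d -> Rabs (t - v) < 2 * d -> square c r (F (s, t))).
  { intros u v. destruct (classic (0 <= u <= 1 /\ 0 <= v <= 1)) as [[Hu Hv] | Hn].
    - destruct (continuous_square_radius Om F u v HO (HC _) (HIn u v Hu Hv)) as [d [Hd Hsq]].
      exists (mkposreal d Hd). intros _ _. exact Hsq.
    - exists (mkposreal 1 Rlt_0_1). intros Hu Hv. exfalso. apply Hn. auto. }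
  set (delta := fun u v => proj1_sig (constructive_indefinite_description _ (H u v))).
  assert (Hdelta : forall u v, 0 <= u <= 1 -> 0 <= v <= 1 -> exists c r, square_in Om c r /\
     forall s t, Rabs (s - u) < 2 * delta u v -> Rabs (t - v) < 2 * delta u v -> square c r (F (s, t))).
  { intros u v. unfold delta.
    destruct (constructive_indefinite_description _ (H u v)) as [d Hd]. exact Hd. }
  destruct (compactness_value_2d 0 1 0 1 delta) as [d Hd].
  destruct (archimed_cor1 d (cond_pos d)) as [M [HMd HM]].
  exists M. split; [exact HM|]. intros i j Hi Hj.
  assert (HMr : 0 < INR M) by (apply lt_0_INR; lia).
  apply NNPP. intro Hn.
  apply (Hd (node M i) (node M j) (node_in_01 M i HM ltac:(lia)) (node_in_01 M j HM ltac:(lia))).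
  intros [u [v [Hu [Hv [H1 [H2 H3]]]]]]. apply Hn.
  destruct (Hdelta u v Hu Hv) as [c [r [HS Hsq]]]. exists c, r. split; [exact HS|].
  assert (Hstep : forall k, node M (S k) = node M k + / INR M)
    by (intros; unfold node; rewrite S_INR; field; lra).
  intros s t Hs Ht. rewrite Hstep in Hs, Ht. apply Hsq.
  - replace (s - u) with ((s - node M i) + (node M i - u)) by ring.
    eapply Rle_lt_trans; [apply Rabs_triang|]. rewrite (Rabs_right (s - node M i)) by lra. lra.
  - replace (t - v) with ((t - node M j) + (node M j - v)) by ring.
    eapply Rle_lt_trans; [apply Rabs_triang|]. rewrite (Rabs_right (t - node M j)) by lra. lra.
Qed.

Definition path_in (Om : C -> Prop) (a b : C) (g : R -> C) : Prop :=
  (forall t, continuous g t) /\ g 0 = a /\ g 1 = b /\ (forall t, 0 <= t <= 1 -> Om (g t)).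

Lemma fine_partition_exists (Om : C -> Prop) (g : R -> C) :
  open Om -> (forall t, continuous g t) -> (forall t, 0 <= t <= 1 -> Om (g t)) ->
  exists N, fine_partition Om g N.
Proof.
  intros HO HC HIn.
  destruct (lebesgue_grid Om (fun p => g (snd p)) HO) as [M [HM HG]].
  - intros [s t]. apply continuous_comp; [apply continuous_snd | apply HC].
  - intros s t _ Ht. apply HIn, Ht.
  - exists M. split; [exact HM|]. intros k Hk. destruct (HG O k HM Hk) as [c [r [HS Hsq]]].
    exists c, r. split; [exact HS|]. intros t Ht. apply (Hsq 0 t); [|exact Ht].
    rewrite node_0. pose proof (node_in_01 M 1 HM ltac:(lia)). lra.
Qed.

Definition path_concat (g h : R -> C) (t : R) : C :=
  if Rle_dec t (1/2) then g (2 * t) else h (2 * t - 1).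
Definition path_rev (g : R -> C) (t : R) : C := g (1 - t).
Definition segment (a b : C) (t : R) : C :=
  (fst a + t * (fst b - fst a), snd a + t * (snd b - snd a)).

Lemma path_concat_l g h t : t <= 1/2 -> path_concat g h t = g (2 * t).
Proof. intros. unfold path_concat. destruct (Rle_dec t (1/2)); [reflexivity | lra]. Qed.

Lemma path_concat_r g h t : g 1 = h 0 -> 1/2 <= t -> path_concat g h t = h (2 * t - 1).
Proof.
  intros E H. unfold path_concat. destruct (Rle_dec t (1/2)); [|reflexivity].
  replace t with (1/2) by lra. replace (2 * (1/2)) with 1 by field. rewrite E. f_equal. field.
Qed.

Lemma continuous_pair {U : UniformSpace} (f g : U -> R) x :
  continuous f x -> continuous g x -> continuous (fun y => (f y, g y) : C) x.
Proof.
  intros Hf Hg. apply (continuous_comp_2 f g (fun u v => (u, v))); auto.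
  apply (continuous_ext (fun p => p)); [intros [u v]; reflexivity | apply continuous_id].
Qed.

Lemma path_rev_continuous g t : (forall t, continuous g t) -> continuous (path_rev g) t.
Proof.
  intros Hg. apply (continuous_comp (fun t => 1 - t) g); [|apply Hg].
  apply (continuous_minus (fun _ => 1) (fun t => t)); [apply continuous_const | apply continuous_id].
Qed.

Lemma affine_continuous (x y t : R) : continuous (fun s => x + s * y) t.
Proof.
  apply (continuous_plus (fun _ => x) (fun s => s * y)); [apply continuous_const|].
  apply (@continuous_mult R_UniformSpace R_AbsRing (fun s => s) (fun _ => y));
    [apply continuous_id | apply continuous_const].
Qed.

Lemma segment_continuous a b t : continuous (segment a b) t.
Proof. apply continuous_pair; apply affine_continuous. Qed.

Lemma segment_in_square c r a b t : square c r a -> square c r b -> 0 <= t <= 1 ->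
  square c r (segment a b t).
Proof.
  intros [Ha1 Ha2] [Hb1 Hb2] Ht.
  assert (K : forall x y z, Rabs (x - z) < r -> Rabs (y - z) < r -> Rabs (x + t * (y - x) - z) < r).
  { intros x y z Hx Hy. replace (x + t * (y - x) - z) with ((1 - t) * (x - z) + t * (y - z)) by ring.
    eapply Rle_lt_trans; [apply Rabs_triang|].
    rewrite !Rabs_mult, (Rabs_right (1 - t)), (Rabs_right t) by lra.
    destruct (Req_dec t 0) as [-> | ]; nra. }
  split; apply K; auto.
Qed.

Lemma continuous_comp_affine (f : R -> C) (x y t : R) :
  (forall s, continuous f s) -> continuous (fun s => f (x + s * y)) t.
Proof.
  intros Hf. apply (continuous_comp (fun s => x + s * y) f); [apply affine_continuous | apply Hf].
Qed.

Lemma path_concat_continuous g h t : (forall t, continuous g t) -> (forall t, continuous h t) ->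
  g 1 = h 0 -> continuous (path_concat g h) t.
Proof.
  intros Hg Hh E. destruct (Rtotal_order t (1/2)) as [Hlt | [-> | Hgt]].
  - apply (continuous_ext_loc _ (fun s => g (0 + s * 2))).
    + apply locally_R_intro with (1/2 - t); [lra|]. intros s Hs. apply Rabs_def2 in Hs.
      rewrite path_concat_l by lra. f_equal. ring.
    + apply continuous_comp_affine, Hg.
  - apply continuous_eps_delta. intros eps Heps.
    destruct (proj1 (continuous_eps_delta g 1) (Hg 1) eps Heps) as [d1 [Hd1 H1]].
    destruct (proj1 (continuous_eps_delta h 0) (Hh 0) eps Heps) as [d2 [Hd2 H2]].
    exists (Rmin d1 d2 / 2). split; [pose proof (Rmin_pos d1 d2 Hd1 Hd2); lra|].
    intros s Hs. change (Rabs (s - 1/2) < Rmin d1 d2 / 2) in Hs.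
    pose proof (Rmin_l d1 d2). pose proof (Rmin_r d1 d2).
    assert (Hs2 : Rabs (2 * s - 1) < Rmin d1 d2).
    { replace (2 * s - 1) with (2 * (s - 1/2)) by field. rewrite Rabs_mult, (Rabs_right 2); lra. }
    rewrite (path_concat_l g h (1/2)) by lra. replace (2 * (1/2)) with 1 by field.
    destruct (Rle_dec s (1/2)).
    + rewrite path_concat_l by lra. apply H1. change (Rabs (2 * s - 1) < d1). lra.
    + rewrite path_concat_r, E by (auto; lra). apply H2. change (Rabs (2 * s - 1 - 0) < d2).
      rewrite Rminus_0_r. lra.
  - apply (continuous_ext_loc _ (fun s => h (-1 + s * 2))).
    + apply locally_R_intro with (t - 1/2); [lra|]. intros s Hs. apply Rabs_def2 in Hs.
      rewrite path_concat_r by (auto; lra). f_equal. ring.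
    + apply continuous_comp_affine, Hh.
Qed.

Lemma path_in_concat (Om : C -> Prop) a b c g h :
  path_in Om a b g -> path_in Om b c h -> path_in Om a c (path_concat g h).
Proof.
  intros [Hc1 [H01 [H11 Hi1]]] [Hc2 [H02 [H12 Hi2]]].
  assert (E : g 1 = h 0) by congruence.
  split; [|split; [|split]].
  - intros t. apply path_concat_continuous; auto.
  - rewrite path_concat_l by lra. replace (2 * 0) with 0 by ring. exact H01.
  - rewrite path_concat_r by (auto; lra). replace (2 * 1 - 1) with 1 by ring. exact H12.
  - intros t Ht. destruct (Rle_dec t (1/2)).
    + rewrite path_concat_l by auto. apply Hi1. lra.
    + rewrite path_concat_r by (auto; lra). apply Hi2. lra.
Qed.

Section Homotopy.

Variables (Om : C -> Prop) (A B D : C -> R).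
Hypothesis Om_open : open Om.
Hypothesis closed : closed_form Om A B D.

(* Summing the stair integrals around the cells of a fine grid of the homotopy,
   row after row: each cell contributes zero by the cocycle identity, the two
   vertical sides cancel by periodicity in [t], and the last row is constant. *)
Lemma path_sum_contractible_loop (g : R -> C) N (Hm : R * R -> C) :
  (forall p : R * R, continuous Hm p) ->
  (forall s t : R, 0 <= s <= 1 -> 0 <= t <= 1 -> Om (Hm (s, t))) ->
  (forall t : R, 0 <= t <= 1 -> Hm (0, t) = g t) ->
  (forall t : R, 0 <= t <= 1 -> Hm (1, t) = Hm (1, 0)) ->
  (forall s : R, 0 <= s <= 1 -> Hm (s, 0) = Hm (s, 1)) ->
  fine_partition Om g N -> path_sum A B g N = 0.
Proof.
  intros HC HIn H0 H1 Hper HfN.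
  destruct (lebesgue_grid Om Hm Om_open HC HIn) as [M [HM HG]].
  set (p := fun i j => Hm (node M i, node M j)).
  set (row := fun i => rsum (fun j => stair_int A B (p i j) (p i (S j))) M).
  assert (Hstep : forall i, (i < M)%nat -> row (S i) = row i).
  { intros i Hi. set (side := fun j => stair_int A B (p i j) (p (S i) j)).
    assert (Hcell : forall j, (j < M)%nat ->
      side j + stair_int A B (p (S i) j) (p (S i) (S j)) =
      stair_int A B (p i j) (p i (S j)) + side (S j)).
    { intros j Hj. destruct (HG i j Hi Hj) as [c [r [HS Hsq]]].
      pose proof (node_le M i (S i) HM ltac:(lia)). pose proof (node_le M j (S j) HM ltac:(lia)).
      unfold side, p.
      rewrite !(stair_int_cocycle Om A B D closed c r HS); try apply Hsq; lra. }
    assert (E := rsum_ext _ _ M Hcell). rewrite !rsum_plus, rsum_shift in E.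
    assert (HCM : side M = side O).
    { unfold side, p. rewrite node_last, node_0 by exact HM.
      rewrite <- (Hper (node M i)), <- (Hper (node M (S i))); auto; apply node_in_01; lia. }
    unfold row. lra. }
  assert (HR : forall i, (i <= M)%nat -> row i = row O).
  { induction i; intros Hi; [reflexivity|]. rewrite Hstep by lia. apply IHi. lia. }
  assert (HRM : row M = 0).
  { unfold row. rewrite <- (rsum_zero M). apply rsum_ext. intros j Hj. unfold p.
    rewrite node_last by exact HM.
    rewrite (H1 (node M j)), (H1 (node M (S j))) by (apply node_in_01; lia).
    apply stair_int_refl. }
  assert (HfM : fine_partition Om g M).
  { split; [exact HM|]. intros k Hk. destruct (HG O k HM Hk) as [c [r [HS Hsq]]].
    exists c, r. split; [exact HS|]. intros t Ht.
    pose proof (node_in_01 M k HM ltac:(lia)). pose proof (node_in_01 M (S k) HM ltac:(lia)).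
    rewrite <- H0 by lra. apply Hsq; [|exact Ht].
    rewrite node_0. pose proof (node_in_01 M 1 HM ltac:(lia)). lra. }
  rewrite (path_sum_indep Om A B D closed g N M HfN HfM), <- HRM, HR by lia.
  unfold row, path_sum. apply rsum_ext. intros j Hj. unfold p.
  rewrite node_0, !H0 by (apply node_in_01; lia).
  reflexivity.
Qed.

Lemma fine_partition_concat g h N : g 1 = h 0 ->
  fine_partition Om g N -> fine_partition Om h N -> fine_partition Om (path_concat g h) (N + N).
Proof.
  intros E [HN Hg] [_ Hh]. split; [lia|]. intros k Hk.
  destruct (Nat.lt_ge_cases k N) as [Hk1 | Hk1].
  - destruct (Hg k Hk1) as [c [r [HS Hsq]]]. exists c, r. split; [exact HS|]. intros t Ht.
    pose proof (node_le (N + N) (S k) N ltac:(lia) Hk1). rewrite node_half in * by exact HN.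
    rewrite path_concat_l by lra. apply Hsq. rewrite <- !(node_double N) by exact HN. lra.
  - destruct (Hh (k - N)%nat ltac:(lia)) as [c [r [HS Hsq]]]. exists c, r. split; [exact HS|].
    intros t Ht. replace k with (N + (k - N))%nat in Ht by lia.
    replace (S (N + (k - N))) with (N + S (k - N))%nat in Ht by lia.
    pose proof (node_le (N + N) N (N + (k - N)) ltac:(lia) ltac:(lia)).
    rewrite node_half in * by exact HN.
    rewrite path_concat_r by (auto; lra). apply Hsq. rewrite <- !(node_double_shift N) by exact HN. lra.
Qed.

Lemma path_sum_concat g h N : g 1 = h 0 -> (0 < N)%nat ->
  path_sum A B (path_concat g h) (N + N) = path_sum A B g N + path_sum A B h N.
Proof.
  intros E HN. unfold path_sum. rewrite rsum_add. f_equal; apply rsum_ext.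
  - intros k Hk. pose proof (node_le (N + N) (S k) N ltac:(lia) Hk).
    pose proof (node_le (N + N) k (S k) ltac:(lia) ltac:(lia)). rewrite node_half in * by exact HN.
    rewrite !path_concat_l, !node_double by (auto; lra). reflexivity.
  - intros j Hj. rewrite <- Nat.add_succ_r.
    pose proof (node_le (N + N) N (N + j) ltac:(lia) ltac:(lia)).
    pose proof (node_le (N + N) (N + j) (N + S j) ltac:(lia) ltac:(lia)).
    rewrite node_half in * by exact HN.
    rewrite !path_concat_r, !node_double_shift by (auto; lra). reflexivity.
Qed.

Lemma fine_partition_rev g N : fine_partition Om g N -> fine_partition Om (path_rev g) N.
Proof.
  intros [HN Hg]. split; [exact HN|]. intros k Hk.
  destruct (Hg (N - S k)%nat ltac:(lia)) as [c [r [HS Hsq]]]. exists c, r. split; [exact HS|].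
  intros t Ht. apply Hsq. replace (S (N - S k)) with (N - k)%nat by lia.
  rewrite <- !node_rev by (auto; lia). unfold path_rev. lra.
Qed.

Lemma path_sum_rev g N : fine_partition Om g N -> path_sum A B (path_rev g) N = - path_sum A B g N.
Proof.
  intros [HN Hg]. unfold path_sum. rewrite (rsum_rev _ N), <- rsum_opp. apply rsum_ext. intros k Hk.
  destruct (Hg k Hk) as [c [r [HS Hsq]]]. unfold path_rev.
  replace (S (N - S k)) with (N - k)%nat by lia. rewrite !node_rev by (auto; lia).
  replace (N - (N - S k))%nat with (S k) by lia. replace (N - (N - k))%nat with k by lia.
  pose proof (node_le N k (S k) HN ltac:(lia)).
  apply (stair_int_rev Om A B D closed c r HS); apply Hsq; lra.
Qed.

Lemma fine_partition_segment c r a b : square_in Om c r -> square c r a -> square c r b ->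
  fine_partition Om (segment a b) 1.
Proof.
  intros HS Ha Hb. split; [lia|]. intros k Hk. replace k with O by lia.
  exists c, r. split; [exact HS|]. intros t Ht. rewrite node_0, node_last in Ht by lia.
  apply segment_in_square; auto.
Qed.

Lemma path_sum_segment a b : path_sum A B (segment a b) 1 = stair_int A B a b.
Proof.
  unfold path_sum. simpl. rewrite node_0, node_last by lia. rewrite Rplus_0_l.
  unfold segment. destruct a, b; simpl. f_equal; f_equal; ring.
Qed.

Hypothesis loops_contract : loops_contractible Om.

(* [g1] followed by [g2] reversed is a contractible loop. *)
Lemma path_sum_path_indep z0 z g1 g2 N1 N2 :
  path_in Om z0 z g1 -> path_in Om z0 z g2 -> fine_partition Om g1 N1 -> fine_partition Om g2 N2 ->
  path_sum A B g1 N1 = path_sum A B g2 N2.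
Proof.
  intros [Hc1 [H01 [H11 Hi1]]] [Hc2 [H02 [H12 Hi2]]] Hf1 Hf2.
  pose proof (fine_partition_refine Om g1 N1 N2 Hf1 (proj1 Hf2)) as Hf1'.
  pose proof (fine_partition_refine Om g2 N2 N1 Hf2 (proj1 Hf1)) as Hf2'.
  rewrite <- (path_sum_refine Om A B D closed g1 N1 N2 Hf1 (proj1 Hf2)),
          <- (path_sum_refine Om A B D closed g2 N2 N1 Hf2 (proj1 Hf1)).
  rewrite (Nat.mul_comm N2 N1) in Hf2' |- *. set (N := (N1 * N2)%nat) in *.
  assert (E : g1 1 = path_rev g2 0) by (unfold path_rev; rewrite Rminus_0_r; congruence).
  set (L := path_concat g1 (path_rev g2)).
  assert (HfL : fine_partition Om L (N + N))
    by (apply fine_partition_concat; auto; apply fine_partition_rev; auto).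
  assert (HL : path_sum A B L (N + N) = 0).
  { destruct (loops_contract L) as [Hm [HmC [HmI [Hm0 [Hm1 Hmp]]]]].
    - intros t. apply path_concat_continuous; auto. intros; apply path_rev_continuous; auto.
    - intros t Ht. unfold L. destruct (Rle_dec t (1/2)).
      + rewrite path_concat_l by auto. apply Hi1. lra.
      + rewrite path_concat_r by (auto; lra). unfold path_rev. apply Hi2. lra.
    - unfold L. rewrite path_concat_l, path_concat_r by (auto; lra). unfold path_rev.
      replace (2 * 0) with 0 by ring. replace (1 - (2 * 1 - 1)) with 0 by ring. congruence.
    - apply (path_sum_contractible_loop L (N + N) Hm); auto. }
  unfold L in HL. rewrite path_sum_concat, path_sum_rev in HL by (auto; apply Hf1'). lra.
Qed.

Definition primitive (Om : C -> Prop) (A B : C -> R) (z0 z : C) : R :=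
  epsilon (inhabits 0) (fun v =>
    exists g N, path_in Om z0 z g /\ fine_partition Om g N /\ path_sum A B g N = v).

Lemma primitive_spec z0 z g N :
  path_in Om z0 z g -> fine_partition Om g N -> primitive Om A B z0 z = path_sum A B g N.
Proof.
  intros Hp Hf. unfold primitive.
  match goal with |- epsilon _ ?Pr = _ =>
    assert (Hex : exists v, Pr v) by (exists (path_sum A B g N), g, N; auto);
    destruct (epsilon_spec (inhabits 0) Pr Hex) as [g' [N' [Hp' [Hf' E]]]] end.
  rewrite <- E. apply (path_sum_path_indep z0 z); auto.
Qed.

Hypothesis Om_path_connected : path_connected Om.

Lemma primitive_local z0 z r w : Om z0 -> square_in Om z r -> square z r w ->
  primitive Om A B z0 w = primitive Om A B z0 z + stair_int A B z w.
Proof.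
  intros Hz0 HS Hw.
  assert (Hzr : square z r z) by (apply square_center; destruct Hw as [Hw _];
                                   pose proof (Rabs_pos (fst w - fst z)); lra).
  destruct (Om_path_connected z0 z Hz0 (HS z Hzr)) as [g [Hgc [Hg0 [Hg1 Hgi]]]].
  assert (Hp : path_in Om z0 z g) by (repeat split; auto).
  destruct (fine_partition_exists Om g Om_open Hgc Hgi) as [N Hf].
  pose proof (fine_partition_refine Om (segment z w) 1 N
                (fine_partition_segment z r z w HS Hzr Hw) (proj1 Hf)) as Hs.
  rewrite Nat.mul_1_l in Hs.
  assert (Hz_seg : segment z w 0 = z) by (unfold segment; destruct z; simpl; f_equal; ring).
  assert (Hps : path_in Om z w (segment z w)).
  { split; [|split; [|split]].
    - intros; apply segment_continuous.
    - exact Hz_seg.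
    - unfold segment. destruct z, w; simpl. f_equal; ring.
    - intros t Ht. apply HS, segment_in_square; auto. }
  assert (Hg_seg : g 1 = segment z w 0) by congruence.
  rewrite (primitive_spec z0 w (path_concat g (segment z w)) (N + N)).
  - rewrite (primitive_spec z0 z g N Hp Hf), path_sum_concat by (auto; apply Hf).
    rewrite <- (Nat.mul_1_l N) at 2.
    rewrite (path_sum_refine Om A B D closed (segment z w) 1 N), path_sum_segment;
      [reflexivity | | apply Hf].
    apply (fine_partition_segment z r); auto.
  - apply path_in_concat with z; auto.
  - apply fine_partition_concat; auto.
Qed.

Lemma primitive_partials z0 z : Om z0 -> Om z ->
  is_derive (fun t => primitive Om A B z0 (t, snd z)) (fst z) (A z) /\
  is_derive (fun t => primitive Om A B z0 (fst z, t)) (snd z) (B z) /\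
  continuous (primitive Om A B z0) z.
Proof.
  intros Hz0 Hz. destruct (open_contains_square Om z Om_open Hz) as [r [Hr HS]].
  pose proof (square_center z r Hr) as Hzr.
  assert (Hloc : forall w, square z r w ->
                  primitive Om A B z0 w = primitive Om A B z0 z + stair_int A B z w)
    by (intros; apply (primitive_local z0 z r); auto).
  destruct z as [z1 z2]. simpl. split; [|split].
  - apply (is_derive_ext_loc (fun t => primitive Om A B z0 (z1, z2) + stair_int A B (z1, z2) (t, z2))).
    + apply locally_R_intro with r; auto. intros y Hy.
      symmetry. apply Hloc. split; [exact Hy | apply Hzr].
    + eapply is_derive_eq.
      * apply (is_derive_plus (fun _ => _) (fun t => stair_int A B (z1, z2) (t, z2))).
        -- apply is_derive_const.
        -- apply (stair_int_du Om A B D closed _ r HS (z1, z2) (z1, z2)); auto.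
      * unfold plus, zero; simpl; ring.
  - apply (is_derive_ext_loc (fun t => primitive Om A B z0 (z1, z2) + stair_int A B (z1, z2) (z1, t))).
    + apply locally_R_intro with r; auto. intros y Hy.
      symmetry. apply Hloc. split; [apply Hzr | exact Hy].
    + eapply is_derive_eq.
      * apply (is_derive_plus (fun _ => _) (fun t => stair_int A B (z1, z2) (z1, t))).
        -- apply is_derive_const.
        -- apply (stair_int_dv Om A B D closed _ r HS (z1, z2) (z1, z2)); auto.
      * unfold plus, zero; simpl; ring.
  - apply (continuous_ext_loc _ (fun w => primitive Om A B z0 (z1, z2) + stair_int A B (z1, z2) w)).
    + exists (mkposreal r Hr). intros y Hy. symmetry. apply Hloc, Hy.
    + apply (@continuous_plus C_UniformSpace R_AbsRing R_NormedModule
               (fun _ => primitive Om A B z0 (z1, z2)) (stair_int A B (z1, z2)));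
        [apply continuous_const | apply (stair_int_continuous Om A B D closed _ r HS Hr)].
Qed.

End Homotopy.

Lemma partials_zero_const_connected (Om : C -> Prop) (h : C -> R) :
  open Om -> path_connected Om ->
  (forall z, Om z -> is_derive (fun t => h (t, snd z)) (fst z) 0 /\
                     is_derive (fun t => h (fst z, t)) (snd z) 0) ->
  forall z w, Om z -> Om w -> h z = h w.
Proof.
  intros HO HPC Hd z w Hz Hw.
  destruct (HPC z w Hz Hw) as [g [Hgc [Hg0 [Hg1 Hgi]]]].
  destruct (fine_partition_exists Om g HO Hgc Hgi) as [N [HN HB]].
  assert (Hk : forall k, (k <= N)%nat -> h (g (node N k)) = h z).
  { induction k; intros Hk; [rewrite node_0, Hg0; reflexivity|].
    rewrite <- IHk by lia. destruct (HB k ltac:(lia)) as [c [r [HS Hsq]]].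
    pose proof (node_le N k (S k) HN ltac:(lia)).
    symmetry. apply (partials_zero_const_square h c r).
    - intros x Hx. apply Hd, HS, Hx.
    - apply Hsq; lra.
    - apply Hsq; lra. }
  rewrite <- (Hk N), node_last, Hg1 by (auto; lia). reflexivity.
Qed.

Definition has_partials (Om : C -> Prop) (f fu fv : C -> R) : Prop :=
  forall z, Om z -> is_derive (fun t => f (t, snd z)) (fst z) (fu z) /\
                    is_derive (fun t => f (fst z, t)) (snd z) (fv z).

Definition C1_partials (Om : C -> Prop) (f fu fv : C -> R) : Prop :=
  has_partials Om f fu fv /\ (forall z, Om z -> continuous f z) /\
  (forall z, Om z -> continuous fu z) /\ (forall z, Om z -> continuous fv z).

Theorem poincare_lemma (Om : C -> Prop) A B D :
  simply_connected_domain Om -> closed_form Om A B D -> exists x : C -> R, C1_partials Om x A B.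
Proof.
  intros [[z0 Hz0] [HO [HPC HLC]]] HF. exists (primitive Om A B z0).
  pose proof (fun z => primitive_partials Om A B D HO HF HLC HPC z0 z Hz0) as Hx.
  split; [|split; [|split]]; intros z Hz.
  - split; apply Hx, Hz.
  - apply Hx, Hz.
  - apply (HF z Hz).
  - apply (HF z Hz).
Qed.

Lemma closed_form_C1 (Om : C -> Prop) A Au Av B Bu Bv :
  C1_partials Om A Au Av -> C1_partials Om B Bu Bv -> (forall z, Om z -> Av z = Bu z) ->
  closed_form Om A B Bu.
Proof.
  intros [HA [HAc [HAu HAv]]] [HB [HBc [HBu HBv]]] E z Hz.
  split; [|split; [|split; [|split]]]; auto.
  - rewrite <- E by exact Hz. apply HA, Hz.
  - apply HB, Hz.
Qed.

Lemma du_partials Om f fu fv z : has_partials Om f fu fv -> Om z -> du f z = fu z.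
Proof. intros H Hz. apply is_derive_unique, (H z Hz). Qed.

Lemma dv_partials Om f fu fv z : has_partials Om f fu fv -> Om z -> dv f z = fv z.
Proof. intros H Hz. apply is_derive_unique, (H z Hz). Qed.

Lemma C1_on_partials (Om : C -> Prop) f : C1_on Om f -> C1_partials Om f (du f) (dv f).
Proof.
  intros H. split; [|split; [|split]]; intros z Hz; destruct (H z Hz) as [H1 [H2 [H3 [H4 H5]]]]; auto.
  split; apply Derive_correct; auto.
Qed.

Lemma C1_partials_C1_on (Om : C -> Prop) f fu fv : open Om -> C1_partials Om f fu fv -> C1_on Om f.
Proof.
  intros HO [Hpd [Hf [Hfu Hfv]]] z Hz. split; [|split; [|split; [|split]]].
  - exists (fu z). apply Hpd, Hz.
  - exists (fv z). apply Hpd, Hz.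
  - apply Hf, Hz.
  - apply (continuous_ext_loc _ fu); [|apply Hfu, Hz].
    apply (locally_open Om); auto. intros w Hw. symmetry. apply (du_partials Om f fu fv); auto.
  - apply (continuous_ext_loc _ fv); [|apply Hfv, Hz].
    apply (locally_open Om); auto. intros w Hw. symmetry. apply (dv_partials Om f fu fv); auto.
Qed.

Lemma C1_partials_ext (Om : C -> Prop) f g gu gv : open Om ->
  (forall z, Om z -> f z = g z) -> C1_partials Om g gu gv -> C1_partials Om f gu gv.
Proof.
  intros HO E [Hpd [Hg [Hgu Hgv]]]. split; [|split; [|split]]; auto.
  - intros z Hz. destruct (open_contains_square Om z HO Hz) as [r [Hr HS]].
    destruct z as [z1 z2]. simpl. split.
    + apply (is_derive_ext_loc (fun t => g (t, z2))); [|apply (Hpd (z1, z2)), Hz].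
      apply locally_R_intro with r; auto. intros t Ht. symmetry. apply E, HS.
      split; simpl; [exact Ht | rewrite Rminus_diag, Rabs_R0; exact Hr].
    + apply (is_derive_ext_loc (fun t => g (z1, t))); [|apply (Hpd (z1, z2)), Hz].
      apply locally_R_intro with r; auto. intros t Ht. symmetry. apply E, HS.
      split; simpl; [rewrite Rminus_diag, Rabs_R0; exact Hr | exact Ht].
  - intros z Hz. apply (continuous_ext_loc _ g); [|apply Hg, Hz].
    apply (locally_open Om); auto. intros w Hw. symmetry. apply E, Hw.
Qed.

Lemma C1_partials_du (Om : C -> Prop) f fu fv fuu fuv : open Om ->
  C1_partials Om f fu fv -> C1_partials Om fu fuu fuv -> C1_partials Om (du f) fuu fuv.
Proof.
  intros HO Hf Hfu. apply (C1_partials_ext Om _ fu); auto.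
  intros z Hz. apply (du_partials Om f fu fv); [apply Hf | exact Hz].
Qed.

Lemma C1_partials_dv (Om : C -> Prop) f fu fv fvu fvv : open Om ->
  C1_partials Om f fu fv -> C1_partials Om fv fvu fvv -> C1_partials Om (dv f) fvu fvv.
Proof.
  intros HO Hf Hfv. apply (C1_partials_ext Om _ fv); auto.
  intros z Hz. apply (dv_partials Om f fu fv); [apply Hf | exact Hz].
Qed.

Lemma continuous_plus_C (f g : C -> R) z :
  continuous f z -> continuous g z -> continuous (fun w => f w + g w) z.
Proof. exact (@continuous_plus C_UniformSpace R_AbsRing R_NormedModule f g z). Qed.

Lemma continuous_opp_C (f : C -> R) z : continuous f z -> continuous (fun w => - f w) z.
Proof. exact (@continuous_opp C_UniformSpace R_AbsRing R_NormedModule f z). Qed.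

Lemma continuous_mult_C (f g : C -> R) z :
  continuous f z -> continuous g z -> continuous (fun w => f w * g w) z.
Proof. exact (@continuous_mult C_UniformSpace R_AbsRing f g z). Qed.

Lemma continuous_inv_C (f : C -> R) z : continuous f z -> f z <> 0 -> continuous (fun w => / f w) z.
Proof. intros. apply (continuous_comp f (fun x => / x)); auto. apply continuous_Rinv; auto. Qed.

Section C1Algebra.

Variable Om : C -> Prop.

Lemma C1_partials_plus f fu fv g gu gv : C1_partials Om f fu fv -> C1_partials Om g gu gv ->
  C1_partials Om (fun z => f z + g z) (fun z => fu z + gu z) (fun z => fv z + gv z).
Proof.
  intros [Hf [Hfc [Hfu Hfv]]] [Hg [Hgc [Hgu Hgv]]].
  split; [|split; [|split]]; intros z Hz; try (apply continuous_plus_C; auto).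
  destruct (Hf z Hz) as [Hfu' Hfv'], (Hg z Hz) as [Hgu' Hgv'].
  split; [exact (is_derive_plus _ _ _ _ _ Hfu' Hgu') | exact (is_derive_plus _ _ _ _ _ Hfv' Hgv')].
Qed.

Lemma C1_partials_minus f fu fv g gu gv : C1_partials Om f fu fv -> C1_partials Om g gu gv ->
  C1_partials Om (fun z => f z - g z) (fun z => fu z - gu z) (fun z => fv z - gv z).
Proof.
  intros [Hf [Hfc [Hfu Hfv]]] [Hg [Hgc [Hgu Hgv]]].
  split; [|split; [|split]]; intros z Hz;
    try (apply continuous_plus_C; [|apply continuous_opp_C]; auto).
  destruct (Hf z Hz) as [Hfu' Hfv'], (Hg z Hz) as [Hgu' Hgv'].
  split; [exact (is_derive_minus _ _ _ _ _ Hfu' Hgu') | exact (is_derive_minus _ _ _ _ _ Hfv' Hgv')].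
Qed.

Lemma C1_partials_mult f fu fv g gu gv : C1_partials Om f fu fv -> C1_partials Om g gu gv ->
  C1_partials Om (fun z => f z * g z)
    (fun z => fu z * g z + f z * gu z) (fun z => fv z * g z + f z * gv z).
Proof.
  intros [Hf [Hfc [Hfu Hfv]]] [Hg [Hgc [Hgu Hgv]]].
  split; [|split; [|split]]; intros z Hz;
    try (repeat (apply continuous_plus_C || apply continuous_mult_C); auto).
  destruct z as [u v]. destruct (Hf _ Hz) as [Hfu' Hfv'], (Hg _ Hz) as [Hgu' Hgv'].
  split; [exact (is_derive_mult _ _ _ _ _ Hfu' Hgu' Rmult_comm)
        | exact (is_derive_mult _ _ _ _ _ Hfv' Hgv' Rmult_comm)].
Qed.

Lemma C1_partials_inv f fu fv : C1_partials Om f fu fv -> (forall z, Om z -> f z <> 0) ->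
  C1_partials Om (fun z => / f z) (fun z => - fu z / f z ^ 2) (fun z => - fv z / f z ^ 2).
Proof.
  intros [Hf [Hfc [Hfu Hfv]]] Hnz.
  assert (Hsq : forall z, Om z -> continuous (fun w => / f w ^ 2) z).
  { intros z Hz. apply continuous_inv_C; [|apply pow_nonzero, Hnz, Hz].
    simpl. apply continuous_mult_C; [apply Hfc, Hz|].
    apply continuous_mult_C; [apply Hfc, Hz | apply continuous_const]. }
  split; [|split; [|split]]; intros z Hz.
  - destruct z as [u v]. destruct (Hf _ Hz) as [Hfu' Hfv']. simpl in *.
    split; [apply (is_derive_inv (fun t => f (t, v))) | apply (is_derive_inv (fun t => f (u, t)))]; auto.
  - apply continuous_inv_C; auto.
  - apply continuous_mult_C; [apply continuous_opp_C|]; auto.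
  - apply continuous_mult_C; [apply continuous_opp_C|]; auto.
Qed.

End C1Algebra.

Ltac C1_partials_closure :=
  repeat match goal with
  | |- C1_partials _ (fun z => _ + _) _ _ => eapply C1_partials_plus
  | |- C1_partials _ (fun z => _ - _) _ _ => eapply C1_partials_minus
  | |- C1_partials _ (fun z => _ * _) _ _ => eapply C1_partials_mult
  | |- C1_partials _ (fun z => / _) _ _ => eapply C1_partials_inv
  | |- C1_partials _ _ _ _ => eassumption
  | |- forall z, _ -> _ <> 0 => eassumption
  end.

Definition C2_partials (Om : C -> Prop) (f fu fv fuu fuv fvu fvv : C -> R) : Prop :=
  C1_partials Om f fu fv /\ C1_partials Om fu fuu fuv /\ C1_partials Om fv fvu fvv.

Lemma C2_on_partials (Om : C -> Prop) f : C2_on Om f ->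
  C2_partials Om f (du f) (dv f) (du (du f)) (dv (du f)) (du (dv f)) (dv (dv f)).
Proof. intros [H0 [Hu Hv]]. split; [|split]; apply C1_on_partials; assumption. Qed.

Lemma C2_partials_C2_on (Om : C -> Prop) f fu fv fuu fuv fvu fvv : open Om ->
  C2_partials Om f fu fv fuu fuv fvu fvv -> C2_on Om f.
Proof.
  intros HO [Hf [Hfu Hfv]]. split; [|split].
  - exact (C1_partials_C1_on Om _ _ _ HO Hf).
  - exact (C1_partials_C1_on Om _ _ _ HO (C1_partials_du Om f fu fv fuu fuv HO Hf Hfu)).
  - exact (C1_partials_C1_on Om _ _ _ HO (C1_partials_dv Om f fu fv fvu fvv HO Hf Hfv)).
Qed.

Lemma C2_partials_plus (Om : C -> Prop) f fu fv fuu fuv fvu fvv g gu gv guu guv gvu gvv :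
  C2_partials Om f fu fv fuu fuv fvu fvv -> C2_partials Om g gu gv guu guv gvu gvv ->
  C2_partials Om (fun z => f z + g z) (fun z => fu z + gu z) (fun z => fv z + gv z)
    (fun z => fuu z + guu z) (fun z => fuv z + guv z) (fun z => fvu z + gvu z) (fun z => fvv z + gvv z).
Proof. intros [Hf [Hfu Hfv]] [Hg [Hgu Hgv]]. split; [|split]; apply C1_partials_plus; assumption. Qed.

Lemma C2_partials_minus (Om : C -> Prop) f fu fv fuu fuv fvu fvv g gu gv guu guv gvu gvv :
  C2_partials Om f fu fv fuu fuv fvu fvv -> C2_partials Om g gu gv guu guv gvu gvv ->
  C2_partials Om (fun z => f z - g z) (fun z => fu z - gu z) (fun z => fv z - gv z)
    (fun z => fuu z - guu z) (fun z => fuv z - guv z) (fun z => fvu z - gvu z) (fun z => fvv z - gvv z).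
Proof. intros [Hf [Hfu Hfv]] [Hg [Hgu Hgv]]. split; [|split]; apply C1_partials_minus; assumption. Qed.

(** * Wirtinger derivatives in real coordinates *)

Lemma du_ext (f g : C -> R) z : (forall w, f w = g w) -> du f z = du g z.
Proof. intros H. unfold du. apply Derive_ext. intros; apply H. Qed.

Lemma dv_ext (f g : C -> R) z : (forall w, f w = g w) -> dv f z = dv g z.
Proof. intros H. unfold dv. apply Derive_ext. intros; apply H. Qed.

Lemma dz_real (f : C -> R) w : dz f w = (du f w / 2, - dv f w / 2).
Proof.
  unfold dz, dzC, duC, dvC, Re, Im, RtoC; simpl. unfold du, dv. rewrite !Derive_const.
  unfold Cmult, Cminus, Cplus, Copp, Ci; simpl. apply injective_projections; simpl; field.
Qed.

Lemma dzdzb_real (f : C -> R) w :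
  dzdzb f w = ((du (du f) w + dv (dv f) w) / 4, (dv (du f) w - du (dv f) w) / 4).
Proof.
  assert (Ere : forall w0, Re (dz f w0) = /2 * du f w0) by (intros; rewrite dz_real; simpl; field).
  assert (Eim : forall w0, Im (dz f w0) = - /2 * dv f w0) by (intros; rewrite dz_real; simpl; field).
  unfold dzdzb, dzbC, duC, dvC.
  rewrite (du_ext _ _ _ Ere), (du_ext _ _ _ Eim), (dv_ext _ _ _ Ere), (dv_ext _ _ _ Eim).
  unfold du, dv. rewrite !Derive_scal.
  unfold Cmult, Cplus, Ci, RtoC; simpl. apply injective_projections; simpl; field.
Qed.

Lemma dz_partials (Om : C -> Prop) f fu fv z : has_partials Om f fu fv -> Om z ->
  dz f z = (fu z / 2, - fv z / 2).
Proof. intros H Hz. rewrite dz_real, (du_partials Om f fu fv), (dv_partials Om f fu fv); auto. Qed.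

Lemma dzdzb_partials (Om : C -> Prop) f fu fv fuu fuv fvu fvv z : open Om ->
  C2_partials Om f fu fv fuu fuv fvu fvv -> Om z ->
  dzdzb f z = ((fuu z + fvv z) / 4, (fuv z - fvu z) / 4).
Proof.
  intros HO [Hf [Hfu Hfv]] Hz. rewrite dzdzb_real.
  pose proof (C1_partials_du Om f fu fv fuu fuv HO Hf Hfu) as [Hdu _].
  pose proof (C1_partials_dv Om f fu fv fvu fvv HO Hf Hfv) as [Hdv _].
  rewrite (du_partials Om _ _ _ z Hdu Hz), (dv_partials Om _ _ _ z Hdu Hz),
          (du_partials Om _ _ _ z Hdv Hz), (dv_partials Om _ _ _ z Hdv Hz).
  reflexivity.
Qed.

Lemma Cmod_sqr (w : C) : Cmod w ^ 2 = fst w * fst w + snd w * snd w.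
Proof. unfold Cmod. rewrite pow2_sqrt; [ring | nra]. Qed.

Lemma continuous_2d (h : C -> R) x y : continuous h (x, y) -> continuity_2d_pt (fun u v => h (u, v)) x y.
Proof.
  intros Hh eps. destruct (proj1 (continuous_eps_delta h (x, y)) Hh eps (cond_pos eps)) as [d [Hd H]].
  exists (mkposreal d Hd). intros u v Hu Hv. apply (H (u, v)). split; simpl; auto.
Qed.

Lemma C2_on_dv_du (Om : C -> Prop) (f : C -> R) z : open Om -> C2_on Om f -> Om z ->
  dv (du f) z = du (dv f) z.
Proof.
  intros HO [H0 [Hu Hv]] Hz. destruct (open_contains_square Om z HO Hz) as [r [Hr HS]].
  destruct z as [x y]. symmetry. unfold du, dv; simpl.
  apply (Schwarz (fun u v => f (u, v))).
  - exists (mkposreal r Hr). intros u v H1 H2.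
    assert (Hin : Om (u, v)) by (apply HS; split; simpl; auto).
    destruct (H0 _ Hin) as [E1 [E2 _]], (Hu _ Hin) as [_ [E3 _]], (Hv _ Hin) as [E4 _].
    simpl in *. auto.
  - exact (continuous_2d (du (dv f)) x y (proj1 (proj2 (proj2 (proj2 (Hv _ Hz)))))).
  - exact (continuous_2d (dv (du f)) x y (proj2 (proj2 (proj2 (proj2 (Hu _ Hz)))))).
Qed.

Lemma dz_eq_const_diff (Om : C -> Prop) (f h : C -> R) z0 :
  open Om -> path_connected Om -> Om z0 -> partials_exist_on Om f -> partials_exist_on Om h ->
  (forall z, Om z -> dz f z = dz h z) -> exists c, forall z, Om z -> f z = h z + c.
Proof.
  intros HO HPC Hz0 Hf Hh E. exists (f z0 - h z0). intros z Hz.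
  enough (Hc : f z - h z = f z0 - h z0) by lra.
  apply (partials_zero_const_connected Om (fun w => f w - h w)); auto. intros w Hw.
  pose proof (E w Hw) as Ew. rewrite !dz_real in Ew.
  assert (E1 : du f w = du h w) by (apply (f_equal fst) in Ew; simpl in Ew; lra).
  assert (E2 : dv f w = dv h w) by (apply (f_equal snd) in Ew; simpl in Ew; lra).
  destruct (Hf w Hw) as [Hf1 Hf2], (Hh w Hw) as [Hh1 Hh2]. split.
  - eapply is_derive_eq.
    + apply (is_derive_minus (fun t => f (t, snd w)) (fun t => h (t, snd w)));
        apply Derive_correct; auto.
    + unfold minus, plus, opp; simpl. unfold du in E1. rewrite E1. ring.
  - eapply is_derive_eq.
    + apply (is_derive_minus (fun t => f (fst w, t)) (fun t => h (fst w, t)));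
        apply Derive_correct; auto.
    + unfold minus, plus, opp; simpl. unfold dv in E2. rewrite E2. ring.
Qed.

Lemma Xz_eq_const_diff (Om : C -> Prop) x1 x2 x3 x4 y1 y2 y3 y4 z0 :
  open Om -> path_connected Om -> Om z0 ->
  partials_exist_on Om x1 -> partials_exist_on Om x2 ->
  partials_exist_on Om x3 -> partials_exist_on Om x4 ->
  partials_exist_on Om y1 -> partials_exist_on Om y2 ->
  partials_exist_on Om y3 -> partials_exist_on Om y4 ->
  (forall z, Om z -> Xz y1 y2 y3 y4 z = Xz x1 x2 x3 x4 z) ->
  exists c1 c2 c3 c4 : R, forall z, Om z ->
    y1 z = x1 z + c1 /\ y2 z = x2 z + c2 /\ y3 z = x3 z + c3 /\ y4 z = x4 z + c4.
Proof.
  intros HO HPC Hz0 Hx1 Hx2 Hx3 Hx4 Hy1 Hy2 Hy3 Hy4 E.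
  assert (Ek : forall z, Om z -> dz y1 z = dz x1 z /\ dz y2 z = dz x2 z /\
                                 dz y3 z = dz x3 z /\ dz y4 z = dz x4 z).
  { intros z Hz. pose proof (E z Hz) as Ez. unfold Xz in Ez. repeat split; congruence. }
  destruct (dz_eq_const_diff Om y1 x1 z0 HO HPC Hz0 Hy1 Hx1) as [c1 H1]; [apply Ek|].
  destruct (dz_eq_const_diff Om y2 x2 z0 HO HPC Hz0 Hy2 Hx2) as [c2 H2]; [apply Ek|].
  destruct (dz_eq_const_diff Om y3 x3 z0 HO HPC Hz0 Hy3 Hx3) as [c3 H3]; [apply Ek|].
  destruct (dz_eq_const_diff Om y4 x4 z0 HO HPC Hz0 Hy4 Hx4) as [c4 H4]; [apply Ek|].
  exists c1, c2, c3, c4. intros z Hz. auto.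
Qed.

Lemma C2_on_partials_exist (Om : C -> Prop) f : C2_on Om f -> partials_exist_on Om f.
Proof. intros [H _] z Hz. destruct (H z Hz) as [H1 [H2 _]]. auto. Qed.

(** * Lorentzian algebra of the representation formula *)

Ltac pair_eq := repeat match goal with |- (_, _) = (_, _) => f_equal end.

Lemma lor_scal4 (c d : C) (X Y : C4) : lor (scal4 c X) (scal4 d Y) = Cmult (Cmult c d) (lor X Y).
Proof.
  destruct X as [[[x1 x2] x3] x4], Y as [[[y1 y2] y3] y4].
  destruct c, d, x1, x2, x3, x4, y1, y2, y3, y4.
  unfold lor, Cminus, scal4, Cmult, Cplus, Copp; simpl. pair_eq; ring.
Qed.

Lemma lor_Gvec (g : C -> C) z : lor (Gvec g z) (Gvec g z) = RtoC 0.
Proof.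
  unfold lor, Gvec, Cminus, Cmult, Cplus, Copp, RtoC. rewrite Cmod_sqr.
  destruct (g z) as [a b]. unfold Re, Im. simpl. pair_eq; ring.
Qed.

Section WeierstrassVector.

Variables (g : C -> C) (P Q : C -> R) (z : C).
Hypothesis g_neq0 : g z <> RtoC 0.

Lemma Cmod_g_sqr_neq0 : fst (g z) * fst (g z) + snd (g z) * snd (g z) <> 0.
Proof. intros E. apply g_neq0. destruct (g z) as [a b]. unfold RtoC. simpl in E. f_equal; nra. Qed.

Lemma WformulaXz_null : lor (WformulaXz g P Q z) (WformulaXz g P Q z) = RtoC 0.
Proof.
  pose proof Cmod_g_sqr_neq0. unfold WformulaXz.
  destruct (g z) as [a b], (dz P z) as [p1 p2], (dz Q z) as [q1 q2]. simpl in *.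
  unfold lor, add4, scal4, Cminus, Cmult, Cplus, Copp, Cinv, Cdiv, Ci, RtoC; simpl.
  pair_eq; field; auto.
Qed.

Lemma WformulaXz_Gvec_orthogonal : lor (WformulaXz g P Q z) (Gvec g z) = RtoC 0.
Proof.
  pose proof Cmod_g_sqr_neq0. unfold WformulaXz, Gvec. rewrite Cmod_sqr.
  destruct (g z) as [a b], (dz P z) as [p1 p2], (dz Q z) as [q1 q2]. unfold Re, Im. simpl in *.
  unfold lor, add4, scal4, Cminus, Cmult, Cplus, Copp, Cinv, Cdiv, Ci, RtoC; simpl.
  pair_eq; field; auto.
Qed.

Lemma WformulaXz_Lambda :
  Cmult (RtoC 2) (lor (WformulaXz g P Q z) (conj4 (WformulaXz g P Q z))) =
  RtoC (4 / (Cmod (g z) ^ 2) * Cmod (Cminus (dz P z) (Cmult (Cabs2 (g z)) (dz Q z))) ^ 2).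
Proof.
  pose proof Cmod_g_sqr_neq0. unfold WformulaXz, Cabs2. rewrite !Cmod_sqr.
  destruct (g z) as [a b], (dz P z) as [p1 p2], (dz Q z) as [q1 q2]. simpl in *.
  unfold lor, conj4, Cconj, add4, scal4, Cminus, Cmult, Cplus, Copp, Cinv, Cdiv, Ci, RtoC; simpl.
  pair_eq; field; auto.
Qed.

End WeierstrassVector.

(** * The representation formula *)

(* For [g = a + i b], these are [(2 Re, -2 Im)] of the first two components of
   the representation formula, i.e. the partial derivatives [x_u], [x_v] that
   [X_z = (x_u - i x_v) / 2] prescribes for [x1] and [x2]. *)
Definition x1_u (a b Pu Pv Qu Qv : C -> R) z :=
  (a z * Pu z - b z * Pv z) * / (a z * a z + b z * b z) + a z * Qu z + b z * Qv z.
Definition x1_v (a b Pu Pv Qu Qv : C -> R) z :=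
  (b z * Pu z + a z * Pv z) * / (a z * a z + b z * b z) - b z * Qu z + a z * Qv z.
Definition x2_u (a b Pu Pv Qu Qv : C -> R) z :=
  (b z * Pu z + a z * Pv z) * / (a z * a z + b z * b z) + b z * Qu z - a z * Qv z.
Definition x2_v (a b Pu Pv Qu Qv : C -> R) z :=
  (b z * Pv z - a z * Pu z) * / (a z * a z + b z * b z) + a z * Qu z + b z * Qv z.

Lemma representation_forms_closed (Om : C -> Prop)
    (a au av b bu bv Pu Pv Puu Puv Pvu Pvv Qu Qv Quu Quv Qvu Qvv : C -> R) :
  C1_partials Om a au av -> C1_partials Om b bu bv ->
  C1_partials Om Pu Puu Puv -> C1_partials Om Pv Pvu Pvv ->
  C1_partials Om Qu Quu Quv -> C1_partials Om Qv Qvu Qvv ->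
  (forall z, Om z -> a z * a z + b z * b z <> 0) ->
  (forall z, Om z -> au z = bv z) -> (forall z, Om z -> bu z = - av z) ->
  (forall z, Om z -> Puv z = Pvu z) -> (forall z, Om z -> Quv z = Qvu z) ->
  (forall z, Om z -> Puu z + Pvv z = (a z * a z + b z * b z) * (Quu z + Qvv z)) ->
  exists A1u A1v B1u B1v A2u A2v B2u B2v,
    C1_partials Om (x1_u a b Pu Pv Qu Qv) A1u A1v /\ C1_partials Om (x1_v a b Pu Pv Qu Qv) B1u B1v /\
    C1_partials Om (x2_u a b Pu Pv Qu Qv) A2u A2v /\ C1_partials Om (x2_v a b Pu Pv Qu Qv) B2u B2v /\
    (forall z, Om z -> A1v z = B1u z /\ A1u z + B1v z = 2 * a z * (Quu z + Qvv z) /\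
                       A2v z = B2u z /\ A2u z + B2v z = 2 * b z * (Quu z + Qvv z)).
Proof.
  intros Ca Cb CPu CPv CQu CQv Hm HCR1 HCR2 HSP HSQ HL.
  do 8 eexists. split; [|split; [|split; [|split]]].
  - unfold x1_u. C1_partials_closure.
  - unfold x1_v. C1_partials_closure.
  - unfold x2_u. C1_partials_closure.
  - unfold x2_v. C1_partials_closure.
  - intros z Hz. cbv beta.
    rewrite <- (HCR1 z Hz), (HCR2 z Hz), (HSP z Hz), (HSQ z Hz).
    assert (E : Pvv z = (a z * a z + b z * b z) * (Quu z + Qvv z) - Puu z)
      by (rewrite <- (HL z Hz); ring).
    rewrite E. pose proof (Hm z Hz). repeat split; field; auto.
Qed.

Section RepresentationFormula.

Variables (Omega : C -> Prop) (g : C -> C) (P Q : C -> R).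
Hypothesis Omega_open : open Omega.
Hypothesis data : weierstrass_first_kind Omega g P Q.

Let a (z : C) : R := Re (g z).
Let b (z : C) : R := Im (g z).
Let X1u := x1_u a b (du P) (dv P) (du Q) (dv Q).
Let X1v := x1_v a b (du P) (dv P) (du Q) (dv Q).
Let X2u := x2_u a b (du P) (dv P) (du Q) (dv Q).
Let X2v := x2_v a b (du P) (dv P) (du Q) (dv Q).

Lemma g_sqnorm_neq0 z : Omega z -> a z * a z + b z * b z <> 0.
Proof.
  intros Hz E. destruct data as [_ [_ [_ [Hg _]]]]. apply (Hg z Hz).
  unfold a, b, Re, Im in E. destruct (g z) as [u v]. simpl in E. unfold RtoC. f_equal; nra.
Qed.

Lemma g_cauchy_riemann z : Omega z -> du a z = dv b z /\ du b z = - dv a z.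
Proof.
  intros Hz. destruct data as [_ [_ [_ [_ [Hhol _]]]]]. pose proof (Hhol z Hz) as E.
  unfold dzbC, duC, dvC, Cmult, Cplus, Ci, RtoC in E. simpl in E. fold a b in E.
  split; [apply (f_equal fst) in E | apply (f_equal snd) in E]; simpl in E; lra.
Qed.

Lemma P_Q_laplacian z : Omega z ->
  du (du P) z + dv (dv P) z = (a z * a z + b z * b z) * (du (du Q) z + dv (dv Q) z).
Proof.
  intros Hz. destruct data as [_ [_ [_ [_ [_ [Hlap _]]]]]]. pose proof (Hlap z Hz) as E.
  rewrite !dzdzb_real in E. unfold Cabs2 in E. rewrite Cmod_sqr in E.
  unfold Cmult, RtoC in E. apply (f_equal fst) in E. simpl in E. unfold a, b, Re, Im. lra.
Qed.

Lemma representation_forms : exists A1u A1v B1u B1v A2u A2v B2u B2v,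
  C1_partials Omega X1u A1u A1v /\ C1_partials Omega X1v B1u B1v /\
  C1_partials Omega X2u A2u A2v /\ C1_partials Omega X2v B2u B2v /\
  (forall z, Omega z -> A1v z = B1u z /\ A1u z + B1v z = 2 * a z * (du (du Q) z + dv (dv Q) z) /\
                        A2v z = B2u z /\ A2u z + B2v z = 2 * b z * (du (du Q) z + dv (dv Q) z)).
Proof.
  destruct data as [[[Ca _] [Cb _]] [CP [CQ _]]].
  destruct (C2_on_partials Omega P CP) as [_ [CPu CPv]].
  destruct (C2_on_partials Omega Q CQ) as [_ [CQu CQv]].
  apply (representation_forms_closed Omega a (du a) (dv a) b (du b) (dv b)
           (du P) (dv P) (du (du P)) (dv (du P)) (du (dv P)) (dv (dv P))
           (du Q) (dv Q) (du (du Q)) (dv (du Q)) (du (dv Q)) (dv (dv Q)));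
    auto using C1_on_partials.
  - apply g_sqnorm_neq0.
  - apply g_cauchy_riemann.
  - apply g_cauchy_riemann.
  - intros z Hz. apply (C2_on_dv_du Omega); auto.
  - intros z Hz. apply (C2_on_dv_du Omega); auto.
  - apply P_Q_laplacian.
Qed.

Lemma representation_coordinates : simply_connected_domain Omega ->
  exists x1 x2, C1_partials Omega x1 X1u X1v /\ C1_partials Omega x2 X2u X2v.
Proof.
  intros Hsc.
  destruct representation_forms
    as [A1u [A1v [B1u [B1v [A2u [A2v [B2u [B2v [CA1 [CB1 [CA2 [CB2 Hid]]]]]]]]]]]].
  destruct (poincare_lemma Omega X1u X1v B1u Hsc) as [x1 Hx1].
  { apply (closed_form_C1 Omega X1u A1u A1v X1v B1u B1v); auto. apply Hid. }
  destruct (poincare_lemma Omega X2u X2v B2u Hsc) as [x2 Hx2].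
  { apply (closed_form_C1 Omega X2u A2u A2v X2v B2u B2v); auto. apply Hid. }
  exists x1, x2. auto.
Qed.

Section Coordinates.

Variables x1 x2 : C -> R.
Hypothesis x1_partials : C1_partials Omega x1 X1u X1v.
Hypothesis x2_partials : C1_partials Omega x2 X2u X2v.
Let x3 z := P z - Q z.
Let x4 z := P z + Q z.

Lemma representation_C2 : C2_on Omega x1 /\ C2_on Omega x2 /\ C2_on Omega x3 /\ C2_on Omega x4.
Proof.
  destruct representation_forms
    as [A1u [A1v [B1u [B1v [A2u [A2v [B2u [B2v [CA1 [CB1 [CA2 [CB2 _]]]]]]]]]]]].
  destruct data as [_ [CP [CQ _]]].
  pose proof (C2_on_partials Omega P CP) as HP. pose proof (C2_on_partials Omega Q CQ) as HQ.
  split; [|split; [|split]].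
  - exact (C2_partials_C2_on Omega _ _ _ _ _ _ _ Omega_open (conj x1_partials (conj CA1 CB1))).
  - exact (C2_partials_C2_on Omega _ _ _ _ _ _ _ Omega_open (conj x2_partials (conj CA2 CB2))).
  - eapply (C2_partials_C2_on Omega x3); [exact Omega_open | apply C2_partials_minus; eassumption].
  - eapply (C2_partials_C2_on Omega x4); [exact Omega_open | apply C2_partials_plus; eassumption].
Qed.

Lemma representation_Xz z : Omega z -> Xz x1 x2 x3 x4 z = WformulaXz g P Q z.
Proof.
  intros Hz. pose proof (g_sqnorm_neq0 z Hz).
  destruct data as [_ [CP [CQ _]]].
  pose proof (C2_on_partials Omega P CP) as HP. pose proof (C2_on_partials Omega Q CQ) as HQ.
  destruct (C2_partials_minus Omega _ _ _ _ _ _ _ _ _ _ _ _ _ _ HP HQ) as [[H3 _] _].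
  destruct (C2_partials_plus Omega _ _ _ _ _ _ _ _ _ _ _ _ _ _ HP HQ) as [[H4 _] _].
  unfold Xz, WformulaXz.
  rewrite (dz_partials Omega x1 _ _ z (proj1 x1_partials) Hz),
          (dz_partials Omega x2 _ _ z (proj1 x2_partials) Hz),
          (dz_partials Omega x3 _ _ z H3 Hz), (dz_partials Omega x4 _ _ z H4 Hz), !dz_real.
  assert (Hg : g z = (a z, b z)) by (unfold a, b, Re, Im; apply surjective_pairing). rewrite Hg.
  unfold X1u, X1v, X2u, X2v, x1_u, x1_v, x2_u, x2_v.
  unfold add4, scal4, Cmult, Cplus, Cinv, Cdiv, Copp, Ci, RtoC. simpl. pair_eq; field; auto.
Qed.

Lemma representation_Xzzb z : Omega z -> Xzzb x1 x2 x3 x4 z = scal4 (dzdzb Q z) (Gvec g z).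
Proof.
  intros Hz.
  destruct representation_forms
    as [A1u [A1v [B1u [B1v [A2u [A2v [B2u [B2v [CA1 [CB1 [CA2 [CB2 Hid]]]]]]]]]]]].
  destruct data as [_ [CP [CQ _]]].
  pose proof (C2_on_partials Omega P CP) as HP. pose proof (C2_on_partials Omega Q CQ) as HQ.
  unfold Xzzb.
  rewrite (dzdzb_partials Omega x1 _ _ _ _ _ _ z Omega_open (conj x1_partials (conj CA1 CB1)) Hz).
  rewrite (dzdzb_partials Omega x2 _ _ _ _ _ _ z Omega_open (conj x2_partials (conj CA2 CB2)) Hz).
  rewrite (dzdzb_partials Omega x3 _ _ _ _ _ _ z Omega_open
             (C2_partials_minus Omega _ _ _ _ _ _ _ _ _ _ _ _ _ _ HP HQ) Hz).
  rewrite (dzdzb_partials Omega x4 _ _ _ _ _ _ z Omega_open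
             (C2_partials_plus Omega _ _ _ _ _ _ _ _ _ _ _ _ _ _ HP HQ) Hz).
  rewrite (dzdzb_partials Omega Q _ _ _ _ _ _ z Omega_open HQ Hz).
  destruct (Hid z Hz) as [I1 [I2 [I3 I4]]].
  pose proof (P_Q_laplacian z Hz) as HL.
  rewrite (C2_on_dv_du Omega P z Omega_open CP Hz), (C2_on_dv_du Omega Q z Omega_open CQ Hz).
  unfold Gvec, scal4, Cmult, RtoC. rewrite Cmod_sqr. simpl.
  change (Re (g z)) with (a z). change (Im (g z)) with (b z).
  change (fst (g z)) with (a z). change (snd (g z)) with (b z).
  pair_eq; lra.
Qed.

End Coordinates.

End RepresentationFormula.

Lemma conformal_spacelike_of_WformulaXz x1 x2 x3 x4 (g : C -> C) (P Q : C -> R) z :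
  g z <> RtoC 0 -> Cminus (dz P z) (Cmult (Cabs2 (g z)) (dz Q z)) <> RtoC 0 ->
  Xz x1 x2 x3 x4 z = WformulaXz g P Q z ->
  conformal_spacelike_at x1 x2 x3 x4 z /\
  Lambda x1 x2 x3 x4 z =
    RtoC (4 / (Cmod (g z) ^ 2) * Cmod (Cminus (dz P z) (Cmult (Cabs2 (g z)) (dz Q z))) ^ 2).
Proof.
  intros Hg Hnd HXz. unfold conformal_spacelike_at, Lambda. rewrite HXz, WformulaXz_Lambda by exact Hg.
  split; [|reflexivity]. split; [apply WformulaXz_null, Hg|]. split; [reflexivity|].
  unfold Re, RtoC. cbn [fst].
  apply Cmod_gt_0 in Hg, Hnd.
  apply Rmult_lt_0_compat; [apply Rdiv_lt_0_compat|]; try apply pow_lt; lra.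
Qed.

Lemma marginally_trapped_of_Xzzb x1 x2 x3 x4 (g : C -> C) (Q : C -> R) z :
  Xzzb x1 x2 x3 x4 z = scal4 (dzdzb Q z) (Gvec g z) ->
  lor (meanH x1 x2 x3 x4 z) (meanH x1 x2 x3 x4 z) = RtoC 0.
Proof.
  intros H. unfold meanH. rewrite lor_scal4, H, lor_scal4, lor_Gvec.
  rewrite !Cmult_0_r. reflexivity.
Qed.

Theorem mainTheorem5 (Omega : C -> Prop) (g : C -> C) (P Q : C -> R) :
  simply_connected_domain Omega ->
  weierstrass_first_kind Omega g P Q ->
  exists x1 x2 x3 x4 : C -> R,
    (* X is C^2 on Omega and has the prescribed X_z *)
    (C2_on Omega x1 /\ C2_on Omega x2 /\ C2_on Omega x3 /\ C2_on Omega x4) /\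
    (forall z, Omega z -> Xz x1 x2 x3 x4 z = WformulaXz g P Q z) /\
    (* uniqueness up to an additive constant vector *)
    (forall y1 y2 y3 y4 : C -> R,
        partials_exist_on Omega y1 -> partials_exist_on Omega y2 ->
        partials_exist_on Omega y3 -> partials_exist_on Omega y4 ->
        (forall z, Omega z -> Xz y1 y2 y3 y4 z = WformulaXz g P Q z) ->
        exists c1 c2 c3 c4 : R, forall z, Omega z ->
          y1 z = x1 z + c1 /\ y2 z = x2 z + c2 /\
          y3 z = x3 z + c3 /\ y4 z = x4 z + c4) /\
    (* (i) *)
    (forall z, Omega z -> Xzzb x1 x2 x3 x4 z = scal4 (dzdzb Q z) (Gvec g z)) /\
    (* (ii) *)
    (exists c3 c4 : R, forall z, Omega z ->
        x3 z = P z - Q z + c3 /\ x4 z = P z + Q z + c4) /\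
    (* (iii) *)
    (forall z, Omega z ->
        lor (Gvec g z) (Gvec g z) = RtoC 0 /\
        lor (Xz x1 x2 x3 x4 z) (Gvec g z) = RtoC 0) /\
    (* (iv) *)
    (forall z, Omega z ->
        conformal_spacelike_at x1 x2 x3 x4 z /\
        Lambda x1 x2 x3 x4 z =
          RtoC (4 / (Cmod (g z) ^ 2) *
                Cmod (Cminus (dz P z) (Cmult (Cabs2 (g z)) (dz Q z))) ^ 2)) /\
    (* (v) marginally trapped *)
    (forall z, Omega z ->
        lor (meanH x1 x2 x3 x4 z) (meanH x1 x2 x3 x4 z) = RtoC 0).
Proof.
  intros Hsc HW. pose proof Hsc as [[z0 Hz0] [HO [HPC _]]].
  pose proof HW as [_ [_ [_ [Hg [_ [_ Hnd]]]]]].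
  destruct (representation_coordinates Omega g P Q HO HW Hsc) as [x1 [x2 [Hx1 Hx2]]].
  pose proof (representation_C2 Omega g P Q HO HW x1 x2 Hx1 Hx2) as HC2.
  pose proof (representation_Xz Omega g P Q HW x1 x2 Hx1 Hx2) as HXz.
  pose proof (representation_Xzzb Omega g P Q HO HW x1 x2 Hx1 Hx2) as HXzzb.
  exists x1, x2, (fun z => P z - Q z), (fun z => P z + Q z).
  split; [exact HC2|]. split; [exact HXz|]. split.
  { intros y1 y2 y3 y4 Hy1 Hy2 Hy3 Hy4 HXy. destruct HC2 as [H1 [H2 [H3 H4]]].
    apply (Xz_eq_const_diff Omega _ _ _ _ _ _ _ _ z0); auto using C2_on_partials_exist.
    intros z Hz. rewrite HXy, HXz; auto. }
  split; [exact HXzzb|]. split; [exists 0, 0; intros; split; ring|].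
  split; [intros z Hz; rewrite HXz by exact Hz; split;
          [apply lor_Gvec | apply WformulaXz_Gvec_orthogonal, Hg, Hz]|].
  split; [intros z Hz; apply conformal_spacelike_of_WformulaXz; auto|].
  intros z Hz. apply (marginally_trapped_of_Xzzb _ _ _ _ g Q), HXzzb, Hz.
Qed.
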